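(* Let $X_3=FVP_3\cap FVK_3$. Then $$X_3\cong \mathbb Z^2 * \mathbb F_3 * \Gamma,$$ where $\mathbb F_3$ is a free group of rank $3$ and $\Gamma=\langle x,y,u,v,p,q\mid xy=uv,\ vu=pq,\ qp=yx\rangle$.
   Context: For $n\ge 2$, the flat virtual braid group $FVB_n$ is the group with generators $\sigma_1,\dots,\sigma_{n-1},\rho_1,\dots,\rho_{n-1}$ and defining relations: $\sigma_i^2=1$, $\rho_i^2=1$ for $1\le i\le n-1$; $\sigma_i\sigma_{i+1}\sigma_i=\sigma_{i+1}\sigma_i\sigma_{i+1}$, $\rho_i\rho_{i+1}\rho_i=\rho_{i+1}\rho_i\rho_{i+1}$ and $\rho_i\rho_{i+1}\sigma_i=\sigma_{i+1}\rho_i\rho_{i+1}$ for $1\le i\le n-2$; $\sigma_i\sigma_j=\sigma_j\sigma_i$, $\rho_i\rho_j=\rho_j\rho_i$ and $\rho_i\sigma_j=\sigma_j\rho_i$ for $|i-j|\ge 2$. Let $S_n=\langle\sigma_1,\dots,\sigma_{n-1}\rangle$ and $S_n'=\langle\rho_1,\dots,\rho_{n-1}\rangle$ in $FVB_n$. $\pi_n\colon FVB_n\to S_n$ is the homomorphism with $\pi_n(\sigma_i)=\pi_n(\rho_i)=\sigma_i$, and $FVP_n=\operatorname{Ker}\pi_n$. $\nu_n\colon FVB_n\to S_n'$ is the homomorphism with $\nu_n(\sigma_i)=1$, $\nu_n(\rho_i)=\rho_i$, and $FVK_n=\operatorname{Ker}\nu_n$. *)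

(* Groups are given by presentations:
   a group <S | R> is the set of words over S and S^{-1} modulo the congruence
   generated by free cancellation and the relations R. *)
From mathcomp Require Import all_boot.
Unset Strict Implicit. Unset Printing Implicit Defensive.

(* A letter: a generator together with an "is inverted" flag. *)
Definition letter (S : Type) := (S * bool)%type.
Definition word (S : Type) := seq (letter S).
Definition inv_letter {S} (x : letter S) : letter S := (x.1, ~~ x.2).
Definition gen {S} (s : S) : word S := [:: (s, false)].

Record presentation := Presentation {
  pgen : Type;
  prel : word pgen -> word pgen -> Prop }.

Inductive weq (P : presentation) : word (pgen P) -> word (pgen P) -> Prop :=
  | weq_refl w : weq P w w
  | weq_sym w1 w2 : weq P w1 w2 -> weq P w2 w1
  | weq_trans w1 w2 w3 : weq P w1 w2 -> weq P w2 w3 -> weq P w1 w3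
  | weq_cancel u v x : weq P (u ++ [:: x; inv_letter x] ++ v) (u ++ v)
  | weq_rel u v l r : prel P l r -> weq P (u ++ l ++ v) (u ++ r ++ v).

(* The subgroup of the group presented by Q given by a predicate H on words
   (closed under weq) is isomorphic to the group presented by P: there is a
   well-defined injective homomorphism from <P> to <Q> whose image is H. *)
Definition iso_to_subgroup (P Q : presentation) (H : word (pgen Q) -> Prop) :=
  exists f : word (pgen P) -> word (pgen Q),
    [/\ (forall w1 w2, weq P w1 w2 -> weq Q (f w1) (f w2)),
        (forall w1 w2, weq Q (f (w1 ++ w2)) (f w1 ++ f w2)),
        (forall w1 w2, weq Q (f w1) (f w2) -> weq P w1 w2),
        (forall w, H (f w)) &
        (forall v, H v -> exists w, weq Q (f w) v)].

Inductive fp_rel (P Q : presentation) :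
    word (pgen P + pgen Q) -> word (pgen P + pgen Q) -> Prop :=
  | fp_l l r : prel P l r ->
      fp_rel P Q (map (fun x => (inl x.1, x.2)) l) (map (fun x => (inl x.1, x.2)) r)
  | fp_r l r : prel Q l r ->
      fp_rel P Q (map (fun x => (inr x.1, x.2)) l) (map (fun x => (inr x.1, x.2)) r).

Definition free_product (P Q : presentation) : presentation :=
  @Presentation (pgen P + pgen Q)%type (fp_rel P Q).

Definition free_group (n : nat) : presentation :=
  @Presentation 'I_n (fun _ _ => False).

Definition Z2_rel (l r : word bool) : Prop :=
  l = gen true ++ gen false /\ r = gen false ++ gen true.
Definition Z2 : presentation := @Presentation bool Z2_rel.

Inductive Ggen := gx | gy | gu | gv | gp | gq.
Inductive Gamma_rel : word Ggen -> word Ggen -> Prop :=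
  | G1 : Gamma_rel (gen gx ++ gen gy) (gen gu ++ gen gv)
  | G2 : Gamma_rel (gen gv ++ gen gu) (gen gp ++ gen gq)
  | G3 : Gamma_rel (gen gq ++ gen gp) (gen gy ++ gen gx).
Definition Gamma : presentation := @Presentation Ggen Gamma_rel.

(* Flat virtual braid group FVB_n: generators sigma_i, rho_i, 1 <= i <= n-1
   (indexed here by 'I_n.-1, i.e. i-1). *)
Inductive fvgen (n : nat) := Sg of 'I_n.-1 | Rh of 'I_n.-1.
Arguments Sg {n}. Arguments Rh {n}.

Inductive FVB_rel (n : nat) : word (fvgen n) -> word (fvgen n) -> Prop :=
  | sig_sq (i : 'I_n.-1) : FVB_rel n (gen (Sg i) ++ gen (Sg i)) [::]
  | rho_sq (i : 'I_n.-1) : FVB_rel n (gen (Rh i) ++ gen (Rh i)) [::]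
  | sig_br (i j : 'I_n.-1) : (nat_of_ord i).+1 = j ->
      FVB_rel n (gen (Sg i) ++ gen (Sg j) ++ gen (Sg i))
              (gen (Sg j) ++ gen (Sg i) ++ gen (Sg j))
  | rho_br (i j : 'I_n.-1) : (nat_of_ord i).+1 = j ->
      FVB_rel n (gen (Rh i) ++ gen (Rh j) ++ gen (Rh i))
              (gen (Rh j) ++ gen (Rh i) ++ gen (Rh j))
  | mixed (i j : 'I_n.-1) : (nat_of_ord i).+1 = j ->
      FVB_rel n (gen (Rh i) ++ gen (Rh j) ++ gen (Sg i))
              (gen (Sg j) ++ gen (Rh i) ++ gen (Rh j))
  | sig_comm (i j : 'I_n.-1) : (nat_of_ord i).+2 <= j \/ (nat_of_ord j).+2 <= i ->
      FVB_rel n (gen (Sg i) ++ gen (Sg j)) (gen (Sg j) ++ gen (Sg i))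
  | rho_comm (i j : 'I_n.-1) : (nat_of_ord i).+2 <= j \/ (nat_of_ord j).+2 <= i ->
      FVB_rel n (gen (Rh i) ++ gen (Rh j)) (gen (Rh j) ++ gen (Rh i))
  | rs_comm (i j : 'I_n.-1) : (nat_of_ord i).+2 <= j \/ (nat_of_ord j).+2 <= i ->
      FVB_rel n (gen (Rh i) ++ gen (Sg j)) (gen (Sg j) ++ gen (Rh i)).

Definition FVB (n : nat) : presentation := @Presentation (fvgen n) (FVB_rel n).

(* pi_n : sigma_i, rho_i |-> sigma_i  (image in S_n = <sigma_i> <= FVB_n). *)
Definition pi_letter n (x : letter (fvgen n)) : letter (fvgen n) :=
  match x.1 with Sg i => (Sg i, x.2) | Rh i => (Sg i, x.2) end.
Definition pi_word n (w : word (fvgen n)) : word (fvgen n) := map (pi_letter n) w.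

(* nu_n : sigma_i |-> 1, rho_i |-> rho_i  (image in S_n' = <rho_i> <= FVB_n). *)
Definition is_rho n (x : letter (fvgen n)) : bool :=
  match x.1 with Sg _ => false | Rh _ => true end.
Definition nu_word n (w : word (fvgen n)) : word (fvgen n) := filter (is_rho n) w.

(* FVP_n = Ker pi_n, FVK_n = Ker nu_n (as sets of words representing them). *)
Definition in_FVP n (w : word (fvgen n)) : Prop := weq (FVB n) (pi_word n w) [::].
Definition in_FVK n (w : word (fvgen n)) : Prop := weq (FVB n) (nu_word n w) [::].
Definition in_X n (w : word (fvgen n)) : Prop := in_FVP n w /\ in_FVK n w.

From mathcomp Require Import all_boot.
Set Implicit Arguments. Unset Strict Implicit. Unset Printing Implicit Defensive.

(* X_3 is the kernel of (pi_3, nu_3) : FVB_3 -> S_3 x S_3, i.e. the stabiliser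
   of a base point for the action of FVB_3 on the 36 points of S_3 x S_3
   through pi_3 and nu_3.  The isomorphism is obtained by the
   Reidemeister-Schreier method, packaged as a general transfer theorem
   (schreier_transfer): given an action of <Q> on a set, a transversal, the
   Schreier generators written in a presentation P, and images in Q of the
   generators of P, finitely many word identities make P -> Q an isomorphism
   onto the stabiliser. *)

Arguments weq_refl {P} w.
Arguments weq_sym {P w1 w2}.
Arguments weq_trans {P w1 w2 w3}.
Arguments weq_cancel {P}.
Arguments weq_rel {P}.

Section WordCalculus.
Variable P : presentation.
Local Notation word := (word (pgen P)).
Local Notation weq := (weq P).

Definition winv (w : word) : word := rev (map inv_letter w).

Lemma inv_letterK (x : letter (pgen P)) : inv_letter (inv_letter x) = x.
Proof. by case: x => s b; rewrite /inv_letter /= negbK. Qed.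

Lemma winvK : involutive winv.
Proof.
by move=> w; rewrite /winv map_rev revK -map_comp (eq_map inv_letterK) map_id.
Qed.

Lemma winv_cat a b : winv (a ++ b) = winv b ++ winv a.
Proof. by rewrite /winv map_cat rev_cat. Qed.

Lemma winv_cons x w : winv (x :: w) = winv w ++ [:: inv_letter x].
Proof. by rewrite /winv /= rev_cons cats1. Qed.

Lemma weq_ctx u v a b : weq a b -> weq (u ++ a ++ v) (u ++ b ++ v).
Proof.
elim=> {a b} [w|w1 w2 _ IH|w1 w2 w3 _ IH1 _ IH2|u0 v0 x|u0 v0 l r Hlr].
- exact: weq_refl.
- exact: weq_sym.
- exact: weq_trans IH2.
- have := weq_cancel (u ++ u0) (v0 ++ v) x.
  by rewrite !catA -!(catA _ _ v) -!catA.
- have := weq_rel (u ++ u0) (v0 ++ v) l r Hlr.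
  by rewrite !catA -!(catA _ _ v) -!catA.
Qed.

Lemma weq_catl u a b : weq a b -> weq (u ++ a) (u ++ b).
Proof. by move=> H; have := weq_ctx u [::] H; rewrite !cats0. Qed.

Lemma weq_catr v a b : weq a b -> weq (a ++ v) (b ++ v).
Proof. by move=> H; have := weq_ctx [::] v H. Qed.

Lemma weq_cat a b c d : weq a b -> weq c d -> weq (a ++ c) (b ++ d).
Proof. by move=> Hab Hcd; apply: weq_trans (weq_catr c Hab) (weq_catl b Hcd). Qed.

Lemma weq_winvr w : weq (w ++ winv w) [::].
Proof.
elim: w => [|x w IH] /=; first exact: weq_refl.
rewrite winv_cons; apply: weq_trans (weq_cancel [::] [::] x).
by have := weq_ctx [:: x] [:: inv_letter x] IH; rewrite /= -!catA.
Qed.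

Lemma weq_winvl w : weq (winv w ++ w) [::].
Proof. by have := weq_winvr (winv w); rewrite winvK. Qed.

Lemma weq_cancelL c w : weq (winv c ++ c ++ w) w.
Proof. by have := weq_catr w (weq_winvl c); rewrite -catA. Qed.

Lemma weq_cancelR w b : weq (w ++ b ++ winv b) w.
Proof. by have := weq_catl w (weq_winvr b); rewrite cats0. Qed.

Lemma weq_of_trivial a b : weq (a ++ winv b) [::] -> weq a b.
Proof.
move=> H; have := weq_cancelR a (winv b); rewrite winvK catA => /weq_sym Ha.
by apply: weq_trans Ha _; have := weq_catr b H.
Qed.

Lemma weq_winv a b : weq a b -> weq (winv a) (winv b).
Proof.
move=> Hab; apply: weq_trans (weq_sym (weq_cancelR (winv a) b)) _.
apply: weq_trans (weq_catl _ (weq_catr _ (weq_sym Hab))) _.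
exact: weq_cancelL.
Qed.

Lemma weq_shift a b c d : weq (a ++ b) (c ++ d) -> weq (d ++ winv b) (winv c ++ a).
Proof.
move=> H; apply: weq_trans (weq_sym (weq_cancelL c _)) _.
rewrite (catA c); apply: weq_trans (weq_catl _ (weq_catr _ (weq_sym H))) _.
by rewrite -catA; apply: weq_catl; apply: weq_cancelR.
Qed.

End WordCalculus.

(* Certified word problems: a word T is trivial in <P> if it freely reduces to
   the same word as a product of conjugates h R^{+-1} h^-1 of relators
   R = l r^-1 taken from a list of relations of P. *)
Section Certificates.
Variable P : presentation.
Local Notation word := (word (pgen P)).
Variable eqS : rel (pgen P).
Hypothesis eqSP : forall s t, eqS s t -> s = t.
Variable rels : seq (word * word).
Hypothesis relsP : forall k, k < size rels ->
  prel P (nth ([::], [::]) rels k).1 (nth ([::], [::]) rels k).2.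

Definition letter_eqb (x y : letter (pgen P)) : bool := eqS x.1 y.1 && (x.2 == y.2).

Lemma letter_eqbP x y : letter_eqb x y -> x = y.
Proof. by case: x y => [s b] [t c] /andP [/= /eqSP -> /eqP ->]. Qed.

Fixpoint word_eqb (a b : word) : bool :=
  match a, b with
  | [::], [::] => true
  | x :: a', y :: b' => letter_eqb x y && word_eqb a' b'
  | _, _ => false
  end.

Lemma word_eqbP a b : word_eqb a b -> a = b.
Proof. by elim: a b => [|x a IH] [|y b] //= /andP [/letter_eqbP -> /IH ->]. Qed.

Fixpoint free_reduce (w : word) : word :=
  match w with
  | [::] => [::]
  | x :: w' =>
    match free_reduce w' with
    | y :: w'' => if letter_eqb y (inv_letter x) then w'' else x :: y :: w''
    | [::] => [:: x]
    end
  end.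

Lemma free_reduceP w : weq P w (free_reduce w).
Proof.
elim: w => [|x w IH] /=; first exact: weq_refl.
have Hx : weq P (x :: w) (x :: free_reduce w) by have := weq_catl [:: x] IH.
case: (free_reduce w) Hx => [|y w''] Hx //; case: ifP => [/letter_eqbP Ey|_] //.
by apply: weq_trans Hx _; rewrite Ey; exact: weq_cancel [::] w'' x.
Qed.

Definition conj_rel (t : word * nat * bool) : word :=
  let: (h, k, e) := t in
  let: (l, r) := nth ([::], [::]) rels k in
  h ++ (if e then winv (l ++ winv r) else l ++ winv r) ++ winv h.

Lemma conj_rel_trivial t : t.1.2 < size rels -> weq P (conj_rel t) [::].
Proof.
case: t => [[h k] e] /= /relsP; case: (nth _ rels k) => l r /= Hlr.
have HR : weq P (l ++ winv r) [::].
  by apply: weq_trans (weq_winvr r); exact: weq_rel [::] (winv r) _ _ Hlr.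
have HRe : weq P (if e then winv (l ++ winv r) else l ++ winv r) [::].
  by case: e => //; exact: weq_winv HR.
by apply: weq_trans (weq_winvr h); have := weq_ctx h (winv h) HRe.
Qed.

Definition certified (T : word) (cert : seq (word * nat * bool)) : bool :=
  all (fun t => t.1.2 < size rels) cert &&
  word_eqb (free_reduce T) (free_reduce (flatten (map conj_rel cert))).

Lemma certified_trivial T cert : certified T cert -> weq P T [::].
Proof.
case/andP=> Hall /word_eqbP Heq.
apply: weq_trans (free_reduceP T) _; rewrite Heq.
apply: weq_trans (weq_sym (free_reduceP _)) _.
elim: cert Hall {Heq} => [|t cert IH] /=; first by move=> _; exact: weq_refl.
by case/andP=> /conj_rel_trivial Ht /IH Hc; have := weq_cat Ht Hc.
Qed.

Lemma certified_weq a b cert : certified (a ++ winv b) cert -> weq P a b.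
Proof. by move/certified_trivial; exact: weq_of_trivial. Qed.

End Certificates.

Section WordAction.
Variables (Q : presentation) (C : Type) (act : C -> letter (pgen Q) -> C).

Definition reach (c : C) (w : word (pgen Q)) : C := foldl act c w.

Lemma reach_cat c a b : reach c (a ++ b) = reach (reach c a) b.
Proof. exact: foldl_cat. Qed.

Hypothesis act_invK : forall c x, act (act c x) (inv_letter x) = c.
Hypothesis act_rel : forall c l r, prel Q l r -> reach c l = reach c r.

Lemma reach_cancel c x : reach c [:: x; inv_letter x] = c.
Proof. exact: act_invK. Qed.

Lemma reach_winv c w : reach (reach c w) (winv w) = c.
Proof.
elim: w c => [|x w IH] c //=.
by rewrite winv_cons reach_cat IH /= act_invK.
Qed.

Lemma reach_weq w1 w2 : weq Q w1 w2 -> forall c, reach c w1 = reach c w2.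
Proof.
elim=> {w1 w2} [w|w1 w2 _ IH|w1 w2 w3 _ IH1 _ IH2|u v x|u v l r Hlr] c.
- by [].
- by rewrite IH.
- by rewrite IH1 IH2.
- by rewrite !reach_cat /= act_invK.
- by rewrite !reach_cat (act_rel _ Hlr).
Qed.

End WordAction.

(* Let <Q> act on a set C, and let H be the
   stabiliser of c0.  Suppose rep c (a transversal, rep c0 = 1) and a map tau
   sending a coset c and a generator s of Q to a word of P satisfy
     rep c * s = img (tau c s) * rep (c.s)              in <Q>,
   where img : P -> Q on generators, and that img, tau are compatible with the
   relations and mutually inverse on generators of P.  Then img is an
   isomorphism from <P> onto H, with inverse the rewriting process rs c0. *)
Section SchreierTransfer.
Variables (P Q : presentation) (C : Type) (c0 : C).
Variable act : C -> letter (pgen Q) -> C.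
Variable tau : C -> pgen Q -> word (pgen P).
Variable img : pgen P -> word (pgen Q).
Variable rep : C -> word (pgen Q).
Local Notation reach := (reach act).

Definition tau_letter (c : C) (x : letter (pgen Q)) : word (pgen P) :=
  if x.2 then winv (tau (act c x) x.1) else tau c x.1.

Fixpoint rs (c : C) (w : word (pgen Q)) : word (pgen P) :=
  if w is x :: w' then tau_letter c x ++ rs (act c x) w' else [::].

Definition img_letter (x : letter (pgen P)) : word (pgen Q) :=
  if x.2 then winv (img x.1) else img x.1.

Definition img_word (w : word (pgen P)) : word (pgen Q) :=
  flatten (map img_letter w).

Hypothesis act_invK : forall c x, act (act c x) (inv_letter x) = c.
Hypothesis act_rel : forall c l r, prel Q l r -> reach c l = reach c r.
Hypothesis rs_rel : forall c l r, prel Q l r -> weq P (rs c l) (rs c r).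
Hypothesis img_rel : forall l r, prel P l r -> weq Q (img_word l) (img_word r).
Hypothesis img_reach : forall s, reach c0 (img s) = c0.
Hypothesis img_rs : forall s, weq P (rs c0 (img s)) (gen s).
Hypothesis rep0 : rep c0 = [::].
Hypothesis rep_gen : forall c s,
  weq Q (rep c ++ gen s) (img_word (tau c s) ++ rep (act c (s, false))).

Lemma rs_cat c a b : rs c (a ++ b) = rs c a ++ rs (reach c a) b.
Proof. by elim: a c => [|x a IH] c //=; rewrite IH catA. Qed.

Lemma tau_letter_inv c x :
  tau_letter (act c x) (inv_letter x) = winv (tau_letter c x).
Proof. by case: x => s [] /=; rewrite /tau_letter /= ?winvK // act_invK. Qed.

Lemma rs_winv c w : rs (reach c w) (winv w) = winv (rs c w).
Proof.
elim: w c => [|x w IH] c //=.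
rewrite winv_cons rs_cat IH reach_winv // winv_cat /= tau_letter_inv.
by rewrite cats0.
Qed.

Lemma rs_weq w1 w2 : weq Q w1 w2 -> forall c, weq P (rs c w1) (rs c w2).
Proof.
elim=> {w1 w2} [w|w1 w2 _ IH|w1 w2 w3 _ IH1 _ IH2|u v x|u v l r Hlr] c.
- exact: weq_refl.
- exact: weq_sym.
- exact: weq_trans (IH1 c) (IH2 c).
- rewrite !rs_cat reach_cancel //= tau_letter_inv cats0.
  exact: weq_ctx (weq_winvr _).
- rewrite !rs_cat (act_rel _ Hlr); exact: weq_ctx (rs_rel _ Hlr).
Qed.

Lemma img_word_cat a b : img_word (a ++ b) = img_word a ++ img_word b.
Proof. by rewrite /img_word map_cat flatten_cat. Qed.

Lemma img_word_cons x w : img_word (x :: w) = img_letter x ++ img_word w.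
Proof. by []. Qed.

Lemma img_letter_inv x : img_letter (inv_letter x) = winv (img_letter x).
Proof. by case: x => s [] /=; rewrite /img_letter /= ?winvK. Qed.

Lemma img_word_winv w : img_word (winv w) = winv (img_word w).
Proof.
elim: w => [|x w IH] //.
rewrite winv_cons img_word_cat IH img_word_cons winv_cat img_letter_inv.
by rewrite /img_word /= cats0.
Qed.

Lemma img_weq w1 w2 : weq P w1 w2 -> weq Q (img_word w1) (img_word w2).
Proof.
elim=> {w1 w2} [w|w1 w2 _ IH|w1 w2 w3 _ IH1 _ IH2|u v x|u v l r Hlr].
- exact: weq_refl.
- exact: weq_sym.
- exact: weq_trans IH2.
- rewrite !img_word_cat !img_word_cons img_letter_inv /img_word /= cats0.
  exact: weq_ctx (weq_winvr _).
- rewrite !img_word_cat; exact: weq_ctx (img_rel Hlr).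
Qed.

Lemma img_letter_reach x : reach c0 (img_letter x) = c0.
Proof.
by case: x => s [] /=; rewrite /img_letter //= -{1}(img_reach s) reach_winv.
Qed.

Lemma img_letter_rs x : weq P (rs c0 (img_letter x)) [:: x].
Proof.
case: x => s [] /=; rewrite /img_letter /=; last exact: img_rs.
by rewrite -{1}(img_reach s) rs_winv //; exact: weq_winv (img_rs s).
Qed.

Lemma img_word_reach w : reach c0 (img_word w) = c0.
Proof. by elim: w => [|x w IH] //=; rewrite reach_cat img_letter_reach. Qed.

Lemma rs_img w : weq P (rs c0 (img_word w)) w.
Proof.
elim: w => [|x w IH] /=; first exact: weq_refl.
rewrite rs_cat img_letter_reach.
by have := weq_cat (img_letter_rs x) IH.
Qed.

Lemma rep_letter c x :
  weq Q (rep c ++ [:: x]) (img_word (tau_letter c x) ++ rep (act c x)).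
Proof.
case: x => s [] /=; rewrite /tau_letter /=; last exact: rep_gen.
have := rep_gen (act c (s, true)) s.
have -> : (s, false) = inv_letter (s, true) by [].
by rewrite act_invK img_word_winv; move/weq_shift.
Qed.

Lemma rep_rs c v : weq Q (rep c ++ v) (img_word (rs c v) ++ rep (reach c v)).
Proof.
elim: v c => [|x v IH] c /=; first by rewrite cats0; exact: weq_refl.
have := weq_catr v (rep_letter c x); rewrite -!catA /= => Hx.
apply: weq_trans Hx _; rewrite img_word_cat -catA; exact: weq_catl (IH _).
Qed.

Theorem schreier_transfer : iso_to_subgroup P Q (fun v => reach c0 v = c0).
Proof.
exists img_word; split.
- exact: img_weq.
- by move=> w1 w2; rewrite img_word_cat; exact: weq_refl.
- move=> w1 w2 /rs_weq /(_ c0) H12.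
  exact: weq_trans (weq_sym (rs_img w1)) (weq_trans H12 (rs_img w2)).
- exact: img_word_reach.
- move=> v Hv; exists (rs c0 v); apply: weq_sym.
  by have := rep_rs c0 v; rewrite Hv rep0 cats0.
Qed.

End SchreierTransfer.

Section KernelAsStabiliser.
Variables (Q : presentation) (D : Type) (d0 : D).
Variable dact : D -> letter (pgen Q) -> D.
Variable phi : letter (pgen Q) -> word (pgen Q).
Variable drep : D -> word (pgen Q).
Local Notation reach := (reach dact).

Hypothesis dact_invK : forall d x, dact (dact d x) (inv_letter x) = d.
Hypothesis dact_rel : forall d l r, prel Q l r -> reach d l = reach d r.
Hypothesis reach_phi : forall d x, reach d (phi x) = dact d x.
Hypothesis drep0 : drep d0 = [::].
Hypothesis drep_step : forall d x, weq Q (drep d ++ phi x) (drep (dact d x)).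

Lemma reach_phi_word d w : reach d (flatten (map phi w)) = reach d w.
Proof. by elim: w d => [|x w IH] d //=; rewrite reach_cat reach_phi IH. Qed.

Lemma drep_word d w : weq Q (drep d ++ flatten (map phi w)) (drep (reach d w)).
Proof.
elim: w d => [|x w IH] d /=; first by rewrite cats0; exact: weq_refl.
rewrite catA; apply: weq_trans (weq_catr _ (drep_step d x)) _; exact: IH.
Qed.

Lemma kernel_stabiliser v : weq Q (flatten (map phi v)) [::] <-> reach d0 v = d0.
Proof.
split=> [Hv | Hv].
  by rewrite -reach_phi_word (reach_weq dact_invK dact_rel Hv).
by have := drep_word d0 v; rewrite Hv drep0.
Qed.

End KernelAsStabiliser.

Lemma iso_to_subgroup_ext P Q (H H' : word (pgen Q) -> Prop) :
  (forall v, H v <-> H' v) -> iso_to_subgroup P Q H -> iso_to_subgroup P Q H'.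
Proof.
move=> HH' [f [f_weq f_cat f_inj f_in f_onto]]; exists f; split=> // [w|v /HH'].
  exact/HH'.
exact: f_onto.
Qed.

Definition F3Gamma : presentation := free_product (free_group 3) Gamma.
Definition FP : presentation := free_product Z2 F3Gamma.
Local Notation FPgen := (pgen FP).
Local Notation FVBgen := (pgen (FVB 3)).

(* A cast from nat to 'I_n.+1 saturating at n; unlike inord it computes. *)
Definition ord_sat (n k : nat) : 'I_n.+1 :=
  Ordinal (leq_ltn_trans (geq_minr k n) (ltnSn n)).

Lemma ord_satK n (a : 'I_n.+1) : ord_sat n a = a.
Proof. by apply: val_inj; rewrite /= (minn_idPl _) // -ltnS. Qed.

Definition ix1 : 'I_(3.-1) := @Ordinal (3.-1) 0 isT.
Definition ix2 : 'I_(3.-1) := @Ordinal (3.-1) 1 isT.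
Definition s1 : letter FVBgen := (Sg ix1, false).
Definition s1' : letter FVBgen := (Sg ix1, true).
Definition s2 : letter FVBgen := (Sg ix2, false).
Definition s2' : letter FVBgen := (Sg ix2, true).
Definition r1 : letter FVBgen := (Rh ix1, false).
Definition r1' : letter FVBgen := (Rh ix1, true).
Definition r2 : letter FVBgen := (Rh ix2, false).
Definition r2' : letter FVBgen := (Rh ix2, true).

Definition z1 : letter FPgen := (inl true, false).
Definition z1' : letter FPgen := (inl true, true).
Definition z2 : letter FPgen := (inl false, false).
Definition z2' : letter FPgen := (inl false, true).
Definition fgen (k : nat) : FPgen := inr (inl (ord_sat 2 k)).
Definition f1 : letter FPgen := (fgen 0, false).
Definition f1' : letter FPgen := (fgen 0, true).
Definition f2 : letter FPgen := (fgen 1, false).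
Definition f2' : letter FPgen := (fgen 1, true).
Definition f3 : letter FPgen := (fgen 2, false).
Definition f3' : letter FPgen := (fgen 2, true).
Definition lx : letter FPgen := (inr (inr gx), false).
Definition lx' : letter FPgen := (inr (inr gx), true).
Definition ly : letter FPgen := (inr (inr gy), false).
Definition ly' : letter FPgen := (inr (inr gy), true).
Definition lu : letter FPgen := (inr (inr gu), false).
Definition lv : letter FPgen := (inr (inr gv), false).
Definition lv' : letter FPgen := (inr (inr gv), true).
Definition lp : letter FPgen := (inr (inr gp), false).
Definition lq : letter FPgen := (inr (inr gq), false).
Definition lq' : letter FPgen := (inr (inr gq), true).

Definition fvb_eqb (s t : FVBgen) : bool :=
  match s, t with
  | Sg i, Sg j | Rh i, Rh j => i == j
  | _, _ => false
  end.

Lemma fvb_eqbP s t : fvb_eqb s t -> s = t.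
Proof. by case: s t => i [] j //= /eqP ->. Qed.

Definition Ggen_code (g : Ggen) : nat :=
  match g with gx => 0 | gy => 1 | gu => 2 | gv => 3 | gp => 4 | gq => 5 end.

Definition fp_eqb (s t : FPgen) : bool :=
  match s, t with
  | inl b, inl b' => b == b'
  | inr (inl i), inr (inl j) => i == j
  | inr (inr g), inr (inr h) => Ggen_code g == Ggen_code h
  | _, _ => false
  end.

Lemma fp_eqbP s t : fp_eqb s t -> s = t.
Proof.
case: s t => [b|[i|g]] [b'|[j|h]] //= /eqP; [by move-> | by move-> |].
by case: g; case: h.
Qed.

(* The defining relations of FVB_3 (the commutation relations are vacuous
   for n = 3) and of FP, as explicit lists. *)
Definition fvb_rels : seq (word FVBgen * word FVBgen) :=
  [:: ([:: s1; s1], [::]); ([:: s2; s2], [::]);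
      ([:: r1; r1], [::]); ([:: r2; r2], [::]);
      ([:: s1; s2; s1], [:: s2; s1; s2]);
      ([:: r1; r2; r1], [:: r2; r1; r2]);
      ([:: r1; r2; s1], [:: s2; r1; r2])].

Definition fp_rels : seq (word FPgen * word FPgen) :=
  [:: ([:: z1; z2], [:: z2; z1]); ([:: lx; ly], [:: lu; lv]);
      ([:: lv; lu], [:: lp; lq]); ([:: lq; lp], [:: ly; lx])].

Lemma ord2_cases (i : 'I_(3.-1)) : i = ix1 \/ i = ix2.
Proof. by case: i => [[|[|k]] Hi]; [left | right | by []]; exact: val_inj. Qed.

Lemma fvb_relsP k : k < size fvb_rels ->
  prel (FVB 3) (nth ([::], [::]) fvb_rels k).1 (nth ([::], [::]) fvb_rels k).2.
Proof.
case: k => [|[|[|[|[|[|[|k]]]]]]] //= _; constructor => //.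
Qed.

Lemma fvb_rels_complete l r : prel (FVB 3) l r ->
  exists2 k, k < size fvb_rels & (l, r) = nth ([::], [::]) fvb_rels k.
Proof.
case=> [i|i|i j Hij|i j Hij|i j Hij|i j Hij|i j Hij|i j Hij].
- by case: (ord2_cases i) => ->; [exists 0 | exists 1].
- by case: (ord2_cases i) => ->; [exists 2 | exists 3].
- by case: (ord2_cases i) Hij => ->; case: (ord2_cases j) => -> //= _; exists 4.
- by case: (ord2_cases i) Hij => ->; case: (ord2_cases j) => -> //= _; exists 5.
- by case: (ord2_cases i) Hij => ->; case: (ord2_cases j) => -> //= _; exists 6.
- by case: (ord2_cases i) Hij => ->; case: (ord2_cases j) => -> /=; case.
- by case: (ord2_cases i) Hij => ->; case: (ord2_cases j) => -> /=; case.
- by case: (ord2_cases i) Hij => ->; case: (ord2_cases j) => -> /=; case.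
Qed.

Lemma fp_relsP k : k < size fp_rels ->
  prel FP (nth ([::], [::]) fp_rels k).1 (nth ([::], [::]) fp_rels k).2.
Proof.
case: k => [|[|[|[|k]]]] //= _.
- exact (fp_l Z2 F3Gamma (gen true ++ gen false) (gen false ++ gen true)
               (conj erefl erefl)).
- exact (fp_r Z2 F3Gamma _ _ (fp_r (free_group 3) Gamma _ _ G1)).
- exact (fp_r Z2 F3Gamma _ _ (fp_r (free_group 3) Gamma _ _ G2)).
- exact (fp_r Z2 F3Gamma _ _ (fp_r (free_group 3) Gamma _ _ G3)).
Qed.

Lemma fp_rels_complete l r : prel FP l r ->
  exists2 k, k < size fp_rels & (l, r) = nth ([::], [::]) fp_rels k.
Proof.
case=> [l0 r0 [-> ->] | l0 r0 [l1 r1 [] | l1 r1 []]]; first by exists 0.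
- by exists 1.
- by exists 2.
- by exists 3.
Qed.

(* The right regular action of S_3 = <sigma_1, sigma_2> on its six elements
   1, s2, s1, s2 s1, s1 s2, s1 s2 s1 (numbered 0..5): s3_act i a is the
   element a * sigma_(i+1). *)
Definition s3_table : seq (seq nat) :=
  [:: [:: 2; 3; 0; 1; 5; 4]; [:: 1; 0; 4; 5; 2; 3]].

Definition s3_act (i : 'I_(3.-1)) (a : 'I_6) : 'I_6 :=
  ord_sat 5 (nth 0 (nth [::] s3_table i) a).

Definition pi_rep_table : seq (word FVBgen) :=
  [:: [::]; [:: s2]; [:: s1]; [:: s2; s1]; [:: s1; s2]; [:: s1; s2; s1]].
Definition nu_rep_table : seq (word FVBgen) :=
  [:: [::]; [:: r2]; [:: r1]; [:: r2; r1]; [:: r1; r2]; [:: r1; r2; r1]].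
Definition pi_rep (a : 'I_6) : word FVBgen := nth [::] pi_rep_table a.
Definition nu_rep (a : 'I_6) : word FVBgen := nth [::] nu_rep_table a.

(* FVB_3 acts on S_3 x S_3 through (pi_3, nu_3); X_3 is the stabiliser of
   the base point c0 = (1, 1). *)
Definition gen_ix (s : FVBgen) : 'I_(3.-1) := match s with Sg i | Rh i => i end.
Definition pi_act (a : 'I_6) (x : letter FVBgen) : 'I_6 := s3_act (gen_ix x.1) a.
Definition nu_act (b : 'I_6) (x : letter FVBgen) : 'I_6 :=
  if x.1 is Rh i then s3_act i b else b.

Definition coset : Type := ('I_6 * 'I_6)%type.
Definition c0 : coset := (ord0, ord0).
Definition coset_act (c : coset) (x : letter FVBgen) : coset :=
  (pi_act c.1 x, nu_act c.2 x).

Lemma reach_coset c w :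
  reach coset_act c w = (reach pi_act c.1 w, reach nu_act c.2 w).
Proof. by elim: w c => [|x w IH] [a b] //=; exact: IH. Qed.

(* A transversal of X_3: coset_rep c is a word of FVB_3 in the coset c. *)
Definition coset_rep_table : seq (seq (word FVBgen)) :=
[::
  [::
    [::];
    [:: s2; r2];
    [:: s1; r1];
    [:: s1; s2; r2; r1];
    [:: s1; r1; s2; r2];
    [:: r1; s2; r2; r1]];
  [::
    [:: s2];
    [:: r2];
    [:: s1; r1; s2];
    [:: r2; s1; r1];
    [:: s1; r1; r2];
    [:: s1; s2; r1; r2; r1]];
  [::
    [:: s1];
    [:: s1; s2; r2];
    [:: r1];
    [:: s2; r2; r1];
    [:: r1; s2; r2];
    [:: s1; r1; s2; r2; r1]];
  [::
    [:: s2; s1];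
    [:: r2; s1];
    [:: s2; r1];
    [:: r2; r1];
    [:: s1; s2; r1; r2];
    [:: s1; r1; r2; r1]];
  [::
    [:: s1; s2];
    [:: s1; r2];
    [:: r1; s2];
    [:: s1; r2; s1; r1];
    [:: r1; r2];
    [:: s2; r1; r2; r1]];
  [::
    [:: s1; s2; s1];
    [:: s1; r2; s1];
    [:: s1; s2; r1];
    [:: s1; r2; r1];
    [:: s2; r1; r2];
    [:: r1; r2; r1]]].
Definition coset_rep (c : coset) : word FVBgen :=
  nth [::] (nth [::] coset_rep_table c.1) c.2.

(* The Schreier generators rep c * s * rep (c.s)^-1, written in the
   generators of FP (indexed by coset and by sigma_1, sigma_2, rho_1, rho_2). *)
Definition gen_code (s : FVBgen) : nat :=
  match s with Sg i => i | Rh i => 2 + i end.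

Definition schreier_table : seq (seq (seq (word FPgen))) :=
[::
  [::
    [:: [::]; [::]; [::]; [::]];
    [:: [:: lx; lx; ly; lv]; [:: f3']; [::]; [::]];
    [:: [:: lv'; lq'; lx'; lx'; f3']; [::]; [::]; [::]];
    [:: [:: z1'; z2']; [:: z2'; f2]; [::]; [::]];
    [:: [:: f1'; z1'; z2'; f2]; [:: f1']; [::]; [::]];
    [:: [:: f3; lx; lx; ly]; [:: f3; lx; lx; lq; lv; lx; ly; lv];
    [::]; [::]]];
  [::
    [:: [::]; [::]; [::]; [::]];
    [:: [::]; [:: f3]; [::]; [::]];
    [:: [:: lx']; [::]; [:: f1'; z1']; [::]];
    [:: [:: f2']; [:: f2'; z2]; [::]; [::]];
    [:: [::]; [:: f1]; [::]; [::]];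
    [:: [:: lv']; [:: lv'; ly'; lx'; lv'; lq'; lx'; lx'; f3'];
    [::]; [::]]];
  [::
    [:: [::]; [::]; [::]; [::]];
    [:: [:: lv'; ly'; lx'; lx']; [:: lv']; [::]; [::]];
    [:: [:: f3; lx; lx; lq; lv]; [::]; [::]; [::]];
    [:: [:: z2; z1]; [:: z1; f1]; [::]; [::]];
    [:: [:: f2'; z2; z1; f1]; [:: f2']; [::]; [::]];
    [:: [:: ly'; lx'; lx'; f3']; [:: lx']; [::]; [::]]];
  [::
    [:: [::]; [::]; [:: z1; f1]; [:: z1; f1]];
    [:: [::]; [:: f3; lx; lx; ly]; [::]; [:: f2'; z2]];
    [:: [:: lx]; [:: lx; lx; ly; lv]; [::]; [::]];
    [:: [:: f2]; [::]; [::]; [::]];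
    [:: [::]; [:: z1'; z2']; [::]; [::]];
    [:: [:: lv]; [:: lv'; lq'; lx'; lx'; f3']; [::]; [::]]];
  [::
    [:: [::]; [::]; [::]; [::]];
    [:: [::]; [:: lv]; [::]; [::]];
    [:: [:: f3; lx; lx; lq; lv; lx; ly; lv]; [::]; [:: f2'; z2];
    [::]];
    [:: [:: f1']; [:: f1'; z1']; [::]; [::]];
    [:: [::]; [:: f2]; [::]; [::]];
    [:: [:: f3']; [:: lx]; [::]; [::]]];
  [::
    [:: [::]; [::]; [:: z2'; f2]; [:: z2'; f2]];
    [:: [::]; [:: ly'; lx'; lx'; f3']; [::]; [:: f1'; z1']];
    [:: [:: lv'; ly'; lx'; lv'; lq'; lx'; lx'; f3']; [:: lv';
    ly'; lx'; lx']; [::]; [::]];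
    [:: [:: f1]; [::]; [::]; [::]];
    [:: [::]; [:: z2; z1]; [::]; [::]];
    [:: [:: f3]; [:: f3; lx; lx; lq; lv]; [::]; [::]]]].
Definition schreier_gen (c : coset) (s : FVBgen) : word FPgen :=
  nth [::] (nth [::] (nth [::] schreier_table c.1) c.2) (gen_code s).

Local Notation rw := (rs coset_act schreier_gen).

Definition img_gen (s : FPgen) : word FVBgen :=
  match s with
  | inl true =>
    [:: s2; s1; r1; r2; s2'; r2'; r1'; s1']
  | inl false =>
    [:: r1; r2; s2; r2'; r1; s1'; s2'; s1']
  | inr (inl k) => nth [::] [::
    [:: s1; r1; r2; s2; r2'; s2'; r1'; s1'];
    [:: r1; r2; s2; r2'; s2'; r1'];
    [:: r2; s2; r2'; s2']] k
  | inr (inr g) =>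
    match g with
    | gx =>
      [:: s2; r1; s1; s2'; r1'; s1']
    | gy =>
      [:: s1; r1; s2; s1'; r1'; s2'; s1; r1; s2; s1'; s2; r1'; r2; s2'; r2';
      s1']
    | gu =>
      [:: s1; r1; s2; s1'; s2; r1'; r2; s2'; r2'; s2; r2; s2'; r2'; s1']
    | gv =>
      [:: s1; r2; s2; r2'; s2'; s1']
    | gp =>
      [:: s1; r2; s2; r2'; s2'; r1; s2; s1'; s2; r1'; r2; s2'; r2'; r1; s1';
      r1'; r2; s2; r2'; r1; s1; s2'; r1'; s1'; s2; r1; s1; s2'; r1'; s1']
    | gq =>
      [:: s1; r1; s2; s1'; r1'; s2'; s1; r1; s2; s1'; r1'; r2; s2'; r2'; r1; s1;
      r1'; s2; r2; s2'; r2'; s1']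
    end
  end.

Local Notation img := (img_word img_gen).

Definition fvb_certified : word FVBgen -> seq (word FVBgen * nat * bool) -> bool :=
  certified fvb_eqb fvb_rels.
Definition fp_certified : word FPgen -> seq (word FPgen * nat * bool) -> bool :=
  certified fp_eqb fp_rels.

(* rep c * s = img (schreier_gen c s) * rep (c.s), by coset and generator. *)
Definition cert_step_table : seq (seq (seq (seq (word FVBgen * nat * bool)))) :=
[::
  [::
    [:: [::]; [::]; [::]; [::]];
    [:: [:: ([:: s2; r2; s1; r2'; r1'; r1'], 2, false);
    ([:: s2], 2, true); ([:: s2; r1], 6, false)]; [:: ([:: s2; r2;
    s2'], 1, false)]; [::]; [:: ([:: s2], 3, false)]];
    [:: [:: ([:: s1; r1; s1'], 0, false)]; [::];
    [:: ([:: s1], 2, false)]; [::]];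
    [:: [:: ([:: s1; s2; r2; r1; s1; r1'; r2'; s2'; r1; r2; s2;
    r2'; r1; s1'; s2'; s1'; s2; s1; r1; r2; s1'], 0, true); ([:: s1; s2; r2;
    r1; s1; r1'; r2'; s2'; r1; r2; s2; r2'; r1; s1'; s2'; s1'; s2; s1; r1; r2;
    s1; r2'; r1'; r1'], 2, false); ([:: s1; s2; r2; r1; s1; r1'; r2'; s2'; r1;
    r2; s2; r2'; r1; s1'; s2'; s1'; s2; s1; r1; r2; s1; r2'; r1'; s2'; s1';
    s2'], 4, true); ([:: s1; s2; r2; r1; s1; r1'; r2'; s2'; r1; r2; s2; r2';
    r1; s1'; s2'; s1'; s2; s1], 6, false); ([:: s1; s2; r2; r1; s1; r1'; r2';
    s2'; r1; r2; s2; s1; s2'], 1, true); ([:: s1; s2; r2; r1; s1; r1'; r2';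
    s2'; r1; r2; s2; s1; s2; r2'; r1'; s2; r1; r2; s2'; r2'; r1'; s2'; r1; r2;
    s2'; s2'], 1, false); ([:: s1; s2; r2; r1; s1; r1'; r2'; s2'; r1; r2; s2;
    s1; s2; r2'; r1'], 6, true); ([:: s1; s2; r2; r1; s1; r1'; r2'; s2'; r1;
    r2; s2; s1; s2; s1; s2'; s1'; r2'; r1'], 6, false); ([:: s1; s2; r2; r1;
    s1; r1'; r2'; s2'; r1; r2; s2], 4, false); ([:: s1; s2; r2; r1; s1; r1';
    r2'; r1; r2], 6, true); ([:: s1; s2; r2; r1; s1; r1'; r2'; r1], 5, true);
    ([:: s1; s2; r2; r1; s1; r1'; r2'], 2, false); ([:: s1; s2; r2; r1; s1;
    s1; r2'; r1'; r2'; r1'], 2, true); ([:: s1; s2; r2; r1; s1; s1; r2'; r1';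
    r2'], 5, false); ([:: s1; s2; r2; r1; s1'], 0, false)]; [:: ([:: s1; s2;
    r2; r1; s2; r1'; s1'; r2'; r1; s2; r1; s1'; r2; r1], 6, true); ([:: s1;
    s2; r2; r1; s2; r1'; s1'; r2'; r1; s2; r1; s1'; r2; r1; r1;
    r2'], 3, false); ([:: s1; s2; r2; r1; s2; r1'; s1'; r2'; r1; s2; r1; s1';
    r2; r1; r1; r2'; s1; r2'; r1'; r1'], 2, true); ([:: s1; s2; r2; r1; s2;
    r1'; s1'; r2'; r1; s2; r1; s1'; r2], 2, false); ([:: s1; s2; r2; r1; s2;
    r1'; s1'; r2'; r1; s2; r1; r2'; r1; s2'; s2'], 1, true); ([:: s1; s2; r2;
    r1; s2; r1'; s1'; r2'; r1; s2; r1; r2'; s1'; r2'; r1], 6, true); ([:: s1;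
    s2; r2; r1; s2; r1'; s1'; r2'; r1; s2; r1; r2'; s1'; r2'], 2, false);
    ([:: s1; s2; r2; r1; s2; r1'; s1'; r2'; r1; s2; r1; r2'; r2';
    r2'], 3, true); ([:: s1; s2; r2; r1; s2'], 1, false)]; [:: ([:: s1; s2;
    r2], 2, false)]; [:: ([:: s1; s2], 5, true)]];
    [:: [:: ([:: s1; r1; s2; r2; s1; r2'; r1; s1'; s2'; s1'; s2;
    s1; r1; r2; s1'], 0, true); ([:: s1; r1; s2; r2; s1; r2'; r1; s1'; s2';
    s1'; s2; s1; r1; r2; s1; r2'; r1'; r1'], 2, false); ([:: s1; r1; s2; r2;
    s1; r2'; r1; s1'; s2'; s1'; s2; s1; r1; r2; s1; r2'; r1'; s2'; s1';
    s2'], 4, true); ([:: s1; r1; s2; r2; s1; r2'; r1; s1'; s2'; s1'; s2;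
    s1], 6, false); ([:: s1; r1; s2; r2; s1'], 0, false)]; [:: ([:: s1; r1;
    s2; r2; s2'], 1, false)]; [::]; [:: ([:: s1; r1; s2], 3, false)]];
    [:: [:: ([:: r1; s2; r2; r1; s1; r1'; r2'; s2'; r1'; r2; s1;
    s2'; s1'; s2], 4, true); ([:: r1; s2; r2; r1; s1; r1'; r2'; s2'; r1'; r2;
    s1; s2'; s1'; s2; s1; s2; s1; s2'; s1'; s2'; s2'], 1, true); ([:: r1; s2;
    r2; r1; s1; r1'; r2'; s2'; r1'; r2; s1; s2'; s1'; s2; s1; s2'], 1, false);
    ([:: r1; s2; r2; r1; s1; r1'; r2'; s2'; r1'; r2; s1; s2'; s1'; s2; s1;
    r2'; r1'; r1'], 2, false); ([:: r1; s2; r2; r1; s1; r1'; r2'; s2'; r1';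
    r2; s1; s2'; s1'; s2; r2'], 2, true); ([:: r1; s2; r2; r1; s1; r1'; r2';
    s2'; r1'; r2; s1; s2'; s1'; s2; r2'; r1], 6, false); ([:: r1; s2; r2; r1;
    s1; r2'; r1'; s1'; r2'; r1; s2; r1'], 5, true); ([:: r1; s2; r2; r1; s1;
    r2'; r1'; s1'; r2'; r1; s2; r2; r1; r2'; r1'; r2'; r1; s2'; r1'; r2; s1;
    r2'; r1'; r1'], 2, false); ([:: r1; s2; r2; r1; s1; r2'; r1'; s1'; r2';
    r1; s2; r2; r1; r2'; r1'; r2'; r1; s2'; r1'], 2, true); ([:: r1; s2; r2;
    r1; s1; r2'; r1'; s1'; r2'; r1; s2; r2; r1; r2'; r1'; r2'; r1;
    s2'], 6, false); ([:: r1; s2], 5, true); ([:: r1; s2; r1; r2'], 3, false);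
    ([:: r1; s2; r1; r2'; r1; r2'; r2'], 3, true); ([:: r1; s2; r1; r2'; s1';
    r2'; r1], 6, true); ([:: r1; s2; r1; r2'; s1'; r2'], 2, false); ([:: r1;
    s2; r1; r2'; r2'; r2'], 3, true); ([:: r2; s1], 6, false)]; [:: ([:: r1;
    s2; r2; r1; s2; r1'; r2'; s1'; s2'], 4, true); ([:: r1; s2; r2; r1; s2;
    r1'; r2'; s1'; s2'; s1; s2; s1'], 0, false); ([:: r1; s2; r2; r1; s2; r1';
    r2'; s1'; s2'; s1; s2; s1'; s2'; s2'], 1, true); ([:: r1; s2; r2;
    r1], 6, true); ([:: r1; s2; r2; r1; r1; r2'], 3, false); ([:: r1; s2; r2;
    r1; r1; r2'; s1; r2'; r2'], 3, true); ([:: r1; s2; r2], 2, false);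
    ([:: r1; s2; s1; r2; r1'; r1'], 2, true)]; [:: ([:: r1; s2;
    r2], 2, false)]; [:: ([:: r1; s2; r2; r1; r2; r1'; s1'; r2'; r1;
    s2], 5, true); ([:: r1; s2; r2; r1; r2; r1'; s1'; r2'; r1; s2; r1;
    r2'], 3, false); ([:: r1; s2; r2; r1; r2; r1'; s1'; r2'; r1; s2; r1; r2';
    r1; r2'; r2'], 3, true); ([:: r1; s2; r2; r1; r2; r1'; s1'; r2'; r1; s2;
    r1; r2'; s1'; r2'; r1], 6, true); ([:: r1; s2; r2; r1; r2; r1'; s1'; r2';
    r1; s2; r1; r2'; s1'; r2'], 2, false); ([:: r1; s2; r2; r1; r2; r1'; s1';
    r2'; r1; s2; r1; r2'; r2'; r2'], 3, true); ([:: r1; s2; r2; r1;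
    r2'], 3, false)]]];
  [::
    [:: [::]; [:: ([::], 1, false)]; [::]; [::]];
    [:: [::]; [::]; [::]; [:: ([::], 3, false)]];
    [:: [:: ([:: s1; r1; s2; s1'], 0, false)]; [:: ([:: s1;
    r1], 1, false)]; [:: ([:: s1; r1; s2; r1'], 2, false)]; [::]];
    [:: [:: ([:: r2; s1; r1; s1; r1'; r2'; r1; r2], 6, true);
    ([:: r2; s1; r1; s1; r1'; r2'; r1], 5, true); ([:: r2; s1; r1; s1; r1';
    r2'], 2, false); ([:: r2; s1; r1; s1; s1; r2'; r2'], 3, true); ([:: r2;
    s1; r1; s1; s1; r1'; s1'; r2'; r1; s2; r1; r2'; r2'; r2'], 3, false);
    ([:: r2; s1; r1; s1; s1; r1'; s1'; r2'; r1; s2; r1; r2'; s1';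
    r2'], 2, true); ([:: r2; s1; r1; s1; s1; r1'; s1'; r2'; r1; s2; r1; r2';
    s1'; r2'; r1], 6, false); ([:: r2; s1; r1; s1; s1; r1'; s1'; r2'; r1; s2;
    r1; r2'; r1; r2'; r2'], 3, false); ([:: r2; s1; r1; s1; s1; r1'; s1'; r2';
    r1; s2; r1; r2'], 3, true); ([:: r2; s1; r1; s1; s1; r1'; s1'; r2'; r1;
    s2], 5, false); ([:: r2; s1; r1; s1'], 0, false)]; [:: ([:: r1; s2; r1;
    r2'; r2'; r2'], 3, false); ([:: r1; s2; r1; r2'; s1'; r2'], 2, true);
    ([:: r1; s2; r1; r2'; s1'; r2'; r1], 6, false); ([:: r1; s2; r1; r2'; r1;
    s2'; s2'], 1, false); ([:: r1; s2; r1; s1'; r2], 2, true); ([:: r1; s2;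
    r1; s1'; r2; r1; r1; r2'; s1; r2'; r1'; r1'], 2, false); ([:: r1; s2; r1;
    s1'; r2; r1; r1; r2'], 3, true); ([:: r1; s2; r1; s1'; r2;
    r1], 6, false)]; [:: ([:: r2; s1], 2, false)]; [:: ([:: r1; s2; r1; r2';
    r2'; r2'], 3, false); ([:: r1; s2; r1; r2'; s1'; r2'], 2, true); ([:: r1;
    s2; r1; r2'; s1'; r2'; r1], 6, false); ([:: r1; s2; r1; r2'; r1; r2';
    r2'], 3, false); ([:: r1; s2; r1; r2'], 3, true); ([:: r1;
    s2], 5, false)]];
    [:: [:: ([:: s1], 6, false)]; [::]; [::]; [:: ([:: s1;
    r1], 3, false)]];
    [:: [:: ([:: s1; s2; r1; r2; r1; s1; r1'; r2'; r1';
    r2], 6, true); ([:: s1; s2; r1; r2; r1; s1; r1'; r2'; r1'], 5, true);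
    ([:: s1; s2; r1; r2; r1; s1; s1; r2'; r1'; r2'], 5, false); ([:: s1; s2;
    r1; r2; r1; s1'], 0, false)]; [:: ([:: s1; s2; r1; r2; r1; s2; r1'; r2';
    s2'; s1; s2; s1'; s2'; s2'], 1, false); ([:: s1; s2; r1; r2; r1; s2; r1';
    r2'; s2'; s1; s2; s1'], 0, true); ([:: s1; s2; r1; r2; r1; s2; r1'; r2';
    s2'], 4, false); ([:: s1; s2; r1; r2; r1; s2; r1'; r2'; s1; r2; r1';
    r1'], 2, false); ([:: s1; s2; r1; r2; r1; s2; r1'], 2, true); ([:: s1; s2;
    r1; r2; r1; s2; r1; r2'; s1; r2'; r2'], 3, false); ([:: s1; s2; r1; r2;
    r1; s2; r1; r2'], 3, true); ([:: s1; s2; r1; r2; r1; s2], 6, false);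
    ([:: s1; s2; r1; r2; r1; s2'], 1, false)]; [:: ([:: s1; s2; r1;
    r2], 2, false)]; [:: ([:: s1; s2; r1], 5, true); ([:: s1; s2], 2, false)]]];
  [::
    [:: [:: ([::], 0, false)]; [::]; [::]; [::]];
    [:: [:: ([:: s1; s2; r2; s1; r2'; r1], 6, true); ([:: s1; s2;
    r2; s1; r2'], 2, false); ([:: s1; s2; r2; s1; s1; r2'; r1';
    r1'], 2, true); ([:: s1; s2; r2; s1'], 0, false)]; [:: ([:: s1; s2; r2;
    s2'], 1, false)]; [::]; [:: ([:: s1; s2], 3, false)]];
    [:: [::]; [::]; [:: ([::], 2, false)]; [::]];
    [:: [:: ([:: s2; r2; r1; s1; r1'; r2'; r1; r2; s2'; r2'; r1';
    s2'; r1; r2; s2], 4, true); ([:: s2; r2; r1; s1; r1'; r2'; r1; r2; s2';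
    r2'; r1'; s2'; r1; r2; s2; s1; s2; s1; s2'; s1'; r2'; r1'], 6, true);
    ([:: s2; r2; r1; s1; r1'; r2'; r1; r2; s2'; r2'; r1'; s2'; r1; r2; s2; s1;
    s2; r2'; r1'], 6, false); ([:: s2; r2; r1; s1; r1'; r2'; r1; r2; s2'; r2';
    r1'; s2'; r1; r2; s2; s1; s2; r2'; r1'; s2; r1; r2; s2'; r2'; r1'; s2';
    r1; r2; s2'; s2'], 1, true); ([:: s2; r2; r1; s1; r1'; r2'; r1; r2; s2';
    r2'; r1'; s2'; r1; r2; s2; s1; s2'], 1, false); ([:: s2; r2; r1; s1; r1';
    r2'; r1; r2; s2'; r2'; r1'; s2'; r1; r2; s2; r2'; r1; s1'; s2'; s1'; s2;
    s1], 6, true); ([:: s2; r2; r1; s1; r1'; r2'; r1; r2; s2'; r2'; r1'; s2';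
    r1; r2; s2; r2'; r1; s1'; s2'; s1'; s2; s1; r1; r2; s1; r2'; r1'; s2';
    s1'; s2'], 4, false); ([:: s2; r2; r1; s1; r1'; r2'; r1; r2; s2'; r2';
    r1'; s2'; r1; r2; s2; r2'; r1; s1'; s2'; s1'; s2; s1; r1; r2; s1; r2';
    r1'; r1'], 2, true); ([:: s2; r2; r1; s1; r1'; r2'; r1; r2; s2'; r2'; r1';
    s2'; r1; r2; s2; r2'; r1; s1'; s2'; s1'; s2; s1; r1; r2; s1'], 0, false);
    ([:: s2; r2; r1; s1; r2'; r1'; r2'], 5, true); ([:: s2; r2; r1; s1; r2';
    r1'; r2'; r1'], 2, false); ([:: s2], 2, true); ([:: s2; r1], 5, false);
    ([:: s2; r1; r2], 6, false)]; [:: ([:: s2; r2; r1], 6, true); ([:: s2; r2;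
    r1; r1; r2'], 3, false); ([:: s2; r2], 2, false); ([:: s2; s1; r2'; r1';
    r1'], 2, true); ([:: s2; s1; r2'; r2'], 3, true); ([:: s2; s1; r1;
    s2'], 6, true); ([:: s2; s1; r1; s2'; r1'], 2, false); ([:: s2; s1; r1;
    s2'; r1'; r2; s1; r2'; r1'; r1'], 2, true)]; [:: ([:: s2; r2], 2, false)];
    [:: ([:: s2], 5, true)]];
    [:: [:: ([:: r1; s2; r1; s1'; s2'; s1'; s2; s1], 6, true);
    ([:: r1; s2; r1; s1'; s2'; s1'; s2; s1; r1; r2; s1; r2'; r1'; s2'; s1';
    s2'], 4, false); ([:: r1; s2; r1; s1'; s2'; s1'; s2; s1; r1; r2; s1; r2';
    r1'; r1'], 2, true); ([:: r1; s2; r1; s1'; s2'; s1'; s2; s1; r1; r2;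
    s1'], 0, false)]; [:: ([:: r1; s2; r2; s2'], 1, false)]; [::];
    [:: ([:: r1; s2], 3, false)]];
    [:: [:: ([:: s1; r1; s2; r2; r1; s1; r1'; r2'; s2'; r1'; r2;
    s2; r2'; r1], 6, true); ([:: s1; r1; s2; r2; r1; s1; r1'; r2'; s2'; r1';
    r2; s2; r2'], 2, false); ([:: s1; r1; s2; r2; r1; s1; r1'; r2'; s2'; r1';
    r2; s2; s1; r2'; r1'; r1'], 2, true); ([:: s1; r1; s2; r2; r1; s1; r1';
    r2'; s2'; r1'; r2; s2; s1; s2'], 1, true); ([:: s1; r1; s2; r2; r1; s1;
    r1'; r2'; s2'; r1'; r2; s2; s1; s2; s1; s2'; s1'; s2'; s2'], 1, false);
    ([:: s1; r1; s2; r2; r1; s1; r1'; r2'; s2'; r1'; r2; s2], 4, false);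
    ([:: s1; r1; s2; r2; r1; s1; r1'; r2'; s2'; r1'; r2; s1], 6, true);
    ([:: s1; r1; s2; r2; r1; s1; r1'; r2'; r1; r2'; r2'; r2'], 3, false);
    ([:: s1; r1; s2; r2; r1; s1; r1'; r2'; r1; r2'; s1'; r2'], 2, true);
    ([:: s1; r1; s2; r2; r1; s1; r1'; r2'; r1; r2'; s1'; r2'; r1], 6, false);
    ([:: s1; r1; s2; r2; r1; s1; r1'; r2'; r1; r2'; r1; r2'; r2'], 3, false);
    ([:: s1; r1; s2; r2; r1; s1; r1'; r2'; r1; r2'], 3, true); ([:: s1; r1;
    s2; r2; r1; s1; r1'; r2'], 5, false); ([:: s1; r1; s2; r2; r1; s1; s1;
    r2'; r1'; s1'; r2'; r1; s2; r2; r1; r2'; r1'; r2'; r1; s2'], 6, true);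
    ([:: s1; r1; s2; r2; r1; s1; s1; r2'; r1'; s1'; r2'; r1; s2; r2; r1; r2';
    r1'; r2'; r1; s2'; r1'], 2, false); ([:: s1; r1; s2; r2; r1; s1; s1; r2';
    r1'; s1'; r2'; r1; s2; r2; r1; r2'; r1'; r2'; r1; s2'; r1'; r2; s1; r2';
    r1'; r1'], 2, true); ([:: s1; r1; s2; r2; r1; s1; s1; r2'; r1'; s1'; r2';
    r1; s2; r1'], 5, false); ([:: s1; r1; s2; r2; r1; s1'], 0, false)];
    [:: ([:: s1; r1; s2; r2; r1; s2; r1'; r2'; s1; r2; r1'; r1'], 2, false);
    ([:: s1; r1; s2; r2; r1; s2; r1'], 2, true); ([:: s1; r1; s2; r2; r1; s2;
    r1; r2'; s1; r2'; r2'], 3, false); ([:: s1; r1; s2; r2; r1; s2; r1;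
    r2'], 3, true); ([:: s1; r1; s2; r2; r1; s2], 6, false); ([:: s1; r1; s2;
    r2; r1; s2'], 1, false)]; [:: ([:: s1; r1; s2; r2], 2, false)];
    [:: ([:: s1; r1; s2; r2; r1; r2; r1'; s1'; r2'; r1; s2; r2; r1; r2'; r1';
    r2'; r1; s2'], 6, true); ([:: s1; r1; s2; r2; r1; r2; r1'; s1'; r2'; r1;
    s2; r2; r1; r2'; r1'; r2'; r1; s2'; r1'], 2, false); ([:: s1; r1; s2; r2;
    r1; r2; r1'; s1'; r2'; r1; s2; r2; r1; r2'; r1'; r2'; r1; s2'; r1'; r2;
    s1; r2'; r1'; r1'], 2, true); ([:: s1; r1; s2; r2; r1; r2; r1'; s1'; r2';
    r1; s2; r1'], 5, false); ([:: s1; r1; s2; r2; r1; r2'], 3, false)]]];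
  [::
    [:: [:: ([:: s2], 0, false)]; [:: ([::], 4, true)]; [::];
    [:: ([:: s2; s1; r1; s2'], 6, true); ([:: s2; s1; r1; s2';
    r1'], 2, false); ([:: s2; s1; r1; s2'; r1'; r2; s1; r2'; r1';
    r1'], 2, true)]];
    [:: [:: ([:: r2], 0, false)]; [:: ([:: r2; s2], 4, true);
    ([:: r2; s2; s1; s2; s1; s2'; s1'; s2'; s2'], 1, true); ([:: r2; s2; s1;
    s2'], 1, false); ([:: r2; s2; s1; r2'; r1'; r1'], 2, false); ([:: r2; s2;
    r2'], 2, true); ([:: r2; s2; r2'; r1], 6, false)]; [::]; [:: ([:: r2; s1;
    r2'; r2'], 3, false); ([::], 2, true); ([:: r1], 6, false)]];
    [:: [::]; [::]; [:: ([:: s2], 2, false)]; [::]];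
    [:: [:: ([:: r2; r1; s1; r1'; s1'; r2'; r1; s2], 5, true);
    ([:: r2; r1; s1; r1'; s1'; r2'; r1; s2; r1; r2'], 3, false); ([:: r2; r1;
    s1; r1'; s1'; r2'; r1; s2; r1; r2'; r1; r2'; r2'], 3, true); ([:: r2; r1;
    s1; r1'; s1'; r2'; r1; s2; r1; r2'; s1'; r2'; r1], 6, true); ([:: r2; r1;
    s1; r1'; s1'; r2'; r1; s2; r1; r2'; s1'; r2'], 2, false); ([:: r2; r1; s1;
    r1'; s1'; r2'; r1; s2; r1; r2'; r2'; r2'], 3, true); ([:: r2; r1; s1; r2';
    r2'], 3, false); ([::], 2, true); ([:: r1], 5, false); ([:: r1;
    r2], 6, false)]; [:: ([:: r2; r1], 6, true); ([:: r2; r1; r1;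
    r2'], 3, false); ([:: r2; r1; r1; r2'; s1; r2'; r2'], 3, true);
    ([:: r2], 2, false); ([:: s1; r2; r1'; r1'], 2, true)];
    [:: ([:: r2], 2, false)]; [:: ([::], 5, true)]];
    [:: [:: ([:: s1; s2; r1; r2; s1; r2'; r1'; s2';
    s2'], 1, false); ([:: s1; s2], 6, false)]; [:: ([:: s1; s2; r1; r2; s2;
    r2'; r1'; s2'; r1; r2; s2; r2'; r1; s1'; s2'; s1'; s2; s1; r1; r2;
    s1'], 0, true); ([:: s1; s2; r1; r2; s2; r2'; r1'; s2'; r1; r2; s2; r2';
    r1; s1'; s2'; s1'; s2; s1; r1; r2; s1; r2'; r1'; r1'], 2, false); ([:: s1;
    s2; r1; r2; s2; r2'; r1'; s2'; r1; r2; s2; r2'; r1; s1'; s2'; s1'; s2; s1;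
    r1; r2; s1; r2'; r1'; s2'; s1'; s2'], 4, true); ([:: s1; s2; r1; r2; s2;
    r2'; r1'; s2'; r1; r2; s2; r2'; r1; s1'; s2'; s1'; s2; s1], 6, false);
    ([:: s1; s2; r1; r2; s2; r2'; r1'; s2'; r1; r2; s2; s1; s2'], 1, true);
    ([:: s1; s2; r1; r2; s2; r2'; r1'; s2'; r1; r2; s2; s1; s2; r2'; r1'; s2;
    r1; r2; s2'; r2'; r1'; s2'; r1; r2; s2'; s2'], 1, false); ([:: s1; s2; r1;
    r2; s2; r2'; r1'; s2'; r1; r2; s2; s1; s2; r2'; r1'], 6, true); ([:: s1;
    s2; r1; r2; s2; r2'; r1'; s2'; r1; r2; s2; s1; s2; s1; s2'; s1'; r2';
    r1'], 6, false); ([:: s1; s2; r1; r2; s2; r2'; r1'; s2'; r1; r2;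
    s2], 4, false); ([:: s1; s2; r1; r2; s2'], 1, false)]; [::]; [:: ([:: s1;
    s2; r1], 3, false)]];
    [:: [:: ([:: s1; r1; r2; r1; s1; r2'; r1'; r2'], 5, true);
    ([:: s1], 5, false); ([:: s1; r2], 6, false)]; [:: ([:: s1; r1; r2; r1;
    s2; r1'; r2'; s1; r2; r1'; r1'], 2, false); ([:: s1; r1; r2; r1; s2;
    r1'], 2, true); ([:: s1; r1; r2; r1; s2; r1; r2'; s1; r2';
    r2'], 3, false); ([:: s1; r1; r2; r1; s2; r1; r2'], 3, true); ([:: s1; r1;
    r2; r1; s2], 6, false); ([:: s1; r1; r2; r1; s2'], 1, false)];
    [:: ([:: s1; r1; r2], 2, false)]; [:: ([:: s1; r1], 5, true);
    ([:: s1], 2, false)]]];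
  [::
    [:: [::]; [:: ([:: s1], 1, false)]; [::]; [::]];
    [:: [::]; [::]; [::]; [:: ([:: s1], 3, false)]];
    [:: [:: ([:: r1], 4, true); ([:: r1; s1; s2; s1'], 0, false);
    ([:: r1; s1; s2; s1'; s2'; s2'], 1, true)]; [:: ([:: r1], 1, false)];
    [::]; [::]];
    [:: [:: ([:: s1; r2; s1; r1; s1; r1'; r2'; r1; r2], 6, true);
    ([:: s1; r2; s1; r1; s1; r1'; r2'; r1], 5, true); ([:: s1; r2; s1; r1; s1;
    r1'; r2'], 2, false); ([:: s1; r2; s1; r1; s1; s1; r2'; r2'], 3, true);
    ([:: s1; r2; s1; r1; s1; s1; r1'; s1'; r2'; r1; s2; r1'], 5, true);
    ([:: s1; r2; s1; r1; s1; s1; r1'; s1'; r2'; r1; s2; r2; r1; r2'; r1'; r2';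
    r1; s2'; r1'; r2; s1; r2'; r1'; r1'], 2, false); ([:: s1; r2; s1; r1; s1;
    s1; r1'; s1'; r2'; r1; s2; r2; r1; r2'; r1'; r2'; r1; s2'; r1'], 2, true);
    ([:: s1; r2; s1; r1; s1; s1; r1'; s1'; r2'; r1; s2; r2; r1; r2'; r1'; r2';
    r1; s2'], 6, false); ([:: s1; r2; s1; r1; s1'], 0, false)]; [:: ([:: s1;
    r2; s1; r1; s2; r1'; r2'; s1; r1; s2'; r1'; r2; s1; r2'; r1';
    r1'], 2, false); ([:: s1; r2; s1; r1; s2; r1'; r2'; s1; r1; s2';
    r1'], 2, true); ([:: s1; r2; s1; r1; s2; r1'; r2'; s1; r1;
    s2'], 6, false); ([:: s1; r2; s1; r1; s2; r1'; r2'; s1; r2';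
    r2'], 3, false); ([:: s1; r2; s1; r1; s2; r1'; r2'; s1; r2'; r1';
    r1'], 2, false); ([:: s1; r2; s1; r1; s2; r1'], 2, true); ([:: s1; r2; s1;
    r1; s2; r1; r2'], 3, true); ([:: s1; r2; s1; r1; s2], 6, false); ([:: s1;
    r2; s1; r1; s2'], 1, false)]; [:: ([:: s1; r2; s1], 2, false)];
    [:: ([:: s1; r1; s2; r1'], 5, true); ([:: s1; r1; s2; r2; r1; r2'; r1';
    r2'; r1; s2'; r1'; r2; s1; r2'; r1'; r1'], 2, false); ([:: s1; r1; s2; r2;
    r1; r2'; r1'; r2'; r1; s2'; r1'], 2, true); ([:: s1; r1; s2; r2; r1; r2';
    r1'; r2'; r1; s2'], 6, false)]];
    [:: [:: ([::], 6, false)]; [::]; [::];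
    [:: ([:: r1], 3, false)]];
    [:: [:: ([:: s2; r1; r2; r1; s1; r1'; r2'; r1';
    r2], 6, true); ([:: s2; r1; r2; r1; s1; r1'; r2'; r1'], 5, true); ([:: s2;
    r1; r2; r1; s1; s1; r2'; r1'; r2'], 5, false); ([:: s2; r1; r2; r1;
    s1'], 0, false)]; [:: ([:: s2; r1; r2; r1], 6, true); ([:: s2; r1; r2; r1;
    r1; r2'], 3, false); ([:: s2; r1; r2; r1; r1; r2'; s1; r2';
    r2'], 3, true); ([:: s2; r1; r2], 2, false); ([:: s2; r1; s1; r2; r1';
    r1'], 2, true)]; [:: ([:: s2; r1; r2], 2, false)]; [:: ([:: s2;
    r1], 5, true); ([:: s2], 2, false)]]];
  [::
    [:: [:: ([:: s1; s2], 0, false)]; [:: ([:: s1], 4, true);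
    ([::], 0, false)]; [:: ([:: s1; s2; s1; r1'], 2, false)]; [:: ([:: s1; s2;
    s1; r2; s1'; r2'; r1], 6, true); ([:: s1; s2; s1; r2; s1';
    r2'], 2, false); ([:: s1; s2; s1; r2'], 3, true); ([:: s1; s2; s1;
    r2'], 3, false)]];
    [:: [:: ([:: s1; r2], 0, false)]; [:: ([:: s1; r2; s1; s2;
    s1'; s2; r2'; r1], 6, true); ([:: s1; r2; s1; s2; s1'; s2;
    r2'], 2, false); ([:: s1; r2; s1; s2; s1'; s2; s1; r2'; r1';
    r1'], 2, true); ([:: s1; r2; s1; s2; s1'; s2; s1; s2'], 1, true); ([:: s1;
    r2; s1; s2; s1'; s2; s1; s2; s1; s2'; s1'; s2'; s2'], 1, false); ([:: s1;
    r2; s1; s2; s1'; s2], 4, false); ([:: s1; r2; s1; s2'], 1, false)]; [::];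
    [:: ([:: s1; r2; s1; r2; r1; s2'; r1'; r2; s1; r2'; r1'; r1'], 2, false);
    ([:: s1; r2; s1; r2; r1; s2'; r1'], 2, true); ([:: s1; r2; s1; r2; r1;
    s2'], 6, false); ([:: s1; r2; s1; r2'], 3, false)]];
    [:: [:: ([:: s1; s2; r1; s1; s2'; s1; s2; s1'; s2';
    s2'], 1, false); ([:: s1; s2; r1; s1; s2'; s1; s2; s1'], 0, true);
    ([:: s1; s2; r1; s1; s2'], 4, false); ([:: s1; s2; r1; s1'], 0, false)];
    [:: ([:: s1; s2; r1; s2'], 1, false)]; [:: ([:: s1; s2], 2, false)]; [::]];
    [:: [:: ([:: s1; r2; r1; s1; r1'; s1'; r2'; r1; s2; r2; r1;
    r2'; r1'; r2'; r1; s2'], 6, true); ([:: s1; r2; r1; s1; r1'; s1'; r2'; r1;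
    s2; r2; r1; r2'; r1'; r2'; r1; s2'; r1'], 2, false); ([:: s1; r2; r1; s1;
    r1'; s1'; r2'; r1; s2; r2; r1; r2'; r1'; r2'; r1; s2'; r1'; r2; s1; r2';
    r1'; r1'], 2, true); ([:: s1; r2; r1; s1; r1'; s1'; r2'; r1; s2;
    r1'], 5, false); ([:: s1; r2; r1; s1; r2'; r2'], 3, false);
    ([:: s1], 2, true); ([:: s1; r1], 5, false); ([:: s1; r1; r2], 6, false)];
    [:: ([:: s1; r2; r1], 6, true); ([:: s1; r2; r1; r1; r2; s1'], 0, false);
    ([:: s1; r2; r1; r1; r2; s1'; r2'; r2'], 3, true); ([:: s1; r2; r1; r1;
    r2'], 3, false); ([:: s1; r2; r1; r1; r2'; s1'; r2; r1'; r1'], 2, true);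
    ([:: s1; r2], 2, false)]; [:: ([:: s1; r2], 2, false)];
    [:: ([:: s1], 5, true)]];
    [:: [:: ([:: s2; r1; r2; s1; r2'; r1'; s2'; s2'], 1, false);
    ([:: s2], 6, false)]; [:: ([:: r1; r2; s2], 4, true); ([:: r1; r2; s2; s1;
    s2; s1; s2'; s1'; r2'; r1'], 6, true); ([:: r1; r2; s2; s1; s2; r2';
    r1'], 6, false); ([:: r1; r2; s2; s1; s2; r2'; r1'; s2; r1; r2; s2'; r2';
    r1'; s2'; r1; r2; s2'; s2'], 1, true); ([:: r1; r2; s2; s1;
    s2'], 1, false); ([:: r1; r2; s2; r2'; r1; s1'; s2'; s1'; s2;
    s1], 6, true); ([:: r1; r2; s2; r2'; r1; s1'; s2'; s1'; s2; s1; r1; r2;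
    s1; r2'; r1'; s2'; s1'; s2'], 4, false); ([:: r1; r2; s2; r2'; r1; s1';
    s2'; s1'; s2; s1; r1; r2; s1; r2'; r1'; r1'], 2, true); ([:: r1; r2; s2;
    r2'; r1; s1'; s2'; s1'; s2; s1; r1; r2; s1'], 0, false)]; [::];
    [:: ([:: s2; r1], 3, false)]];
    [:: [:: ([:: r1; r2; r1; s1; r2'; r1'; r2'], 5, true);
    ([::], 5, false); ([:: r2], 6, false)]; [:: ([:: r1; r2; r1], 6, true);
    ([:: r1; r2; r1; r1; r2'], 3, false); ([:: r1; r2; r1; r1; r2'; s1; r2';
    r2'], 3, true); ([:: r1; r2], 2, false); ([:: r1; s1; r2; r1';
    r1'], 2, true)]; [:: ([:: r1; r2], 2, false)]; [:: ([:: r1], 5, true);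
    ([::], 2, false)]]]].
Definition cert_step (c : coset) (s : FVBgen) : seq (word FVBgen * nat * bool) :=
  nth [::] (nth [::] (nth [::] cert_step_table c.1) c.2) (gen_code s).

(* Rewritings of the relators of FVB_3 from every coset agree in FP; only the
   braid relation of the sigmas needs the relations of FP, and only from the
   cosets (a, 3) and (a, 5) (table indexed by the second coordinate). *)
Definition cert_braid_table : seq (seq (seq (word FPgen * nat * bool))) :=
[::
  [::];
  [::];
  [::];
  [:: [:: ([:: z2'; z1'], 0, false)]; [:: ([:: f2'; z2; z1'; z2'], 0, true)];
  [:: ([::], 0, true)]; [:: ([:: z1'], 0, false)]; [:: ([:: f1'; z1'; z2; z1;
  z2'; z1'], 0, false)]; [:: ([:: z1'], 0, true)]];
  [::];
  [:: [:: ([:: f3; lx; lx; lq; lv; lx; ly; lv'; lq'; lx'; ly'], 3, true);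
  ([:: f3; lx; lx; lq; lv; lx; ly; lv'; lq'; lx'; ly'; lq], 2, true); ([:: f3;
  lx; lx; lq; lv; lx; ly; lv'; lq'; lx'; ly'; lq; lv], 1, true)];
  [:: ([:: lv'; ly'; lx'], 1, false); ([:: lv'; ly'; lx'; lv'], 2, false);
  ([:: lv'; ly'; lx'; lv'; lq'], 3, false)]; [:: ([:: ly'; lq; lv], 1, false);
  ([:: ly'; lq], 2, false); ([:: ly'], 3, false)]; [:: ([:: lv'; lq'; lx';
  ly'], 3, true); ([:: lv'; lq'; lx'; ly'; lq], 2, true); ([:: lv'; lq'; lx';
  ly'; lq; lv], 1, true)]; [:: ([:: lx; ly'; lq; lv; lx; ly; lv'; lq'; lx';
  ly'], 3, true); ([:: lx; ly'; lq; lv; lx; ly; lv'; lq'; lx'; ly';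
  lq], 2, true); ([:: lx; ly'; lq; lv; lx; ly; lv'; lq'; lx'; ly'; lq;
  lv], 1, true)]; [:: ([:: f3; lx; ly'; lq; lv], 1, false); ([:: f3; lx; ly';
  lq], 2, false); ([:: f3; lx; ly'], 3, false)]]].
Definition cert_rel (c : coset) (k : nat) : seq (word FPgen * nat * bool) :=
  if k == 4 then nth [::] (nth [::] cert_braid_table c.2) c.1 else [::].

Definition cert_img_rel_table : seq (seq (word FVBgen * nat * bool)) :=
[::
  [:: ([:: r1; r2; s2; r2'; r1; s1'; s2'; s1'; s2; s1; r1; r2; s2'; r2'; r1';
  s2; r1; r2; s2'; r2'; r1'; s2'; r1; r2; s2], 4, true); ([:: r1; r2; s2; r2';
  r1; s1'; s2'; s1'; s2; s1; r1; r2; s2'; r2'; r1'; s2; r1; r2; s2'; r2'; r1';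
  s2'; r1; r2; s2; s1; s2; s1; s2'; s1'; r2'; r1'], 6, true); ([:: r1; r2; s2;
  r2'; r1; s1'; s2'; s1'; s2; s1; r1; r2; s2'; r2'; r1'; s2; r1; r2; s2'; r2';
  r1'; s2'; r1; r2; s2; s1; s2; r2'; r1'], 6, false); ([:: r1; r2; s2; r2';
  r1; s1'; s2'; s1'; s2; s1; r1; r2; s2'; r2'; r1'; s2; r1; r2; s2'; r2'; r1';
  s2'; r1; r2; s2; s1; s2; r2'; r1'; s2; r1; r2; s2'; r2'; r1'; s2'; r1; r2;
  s2'; s2'], 1, true); ([:: r1; r2; s2; r2'; r1; s1'; s2'; s1'; s2; s1; r1;
  r2; s2'; r2'; r1'; s2; r1; r2; s2'; r2'; r1'; s2'; r1; r2; s2; s1;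
  s2'], 1, false); ([:: r1; r2; s2; r2'; r1; s1'; s2'; s1'; s2; s1; r1; r2;
  s2'; r2'; r1'; s2; r1; r2; s2'; r2'; r1'; s2'; r1; r2; s2; r2'; r1; s1';
  s2'; s1'; s2; s1], 6, true); ([:: r1; r2; s2; r2'; r1; s1'; s2'; s1'; s2;
  s1; r1; r2; s2'; r2'; r1'; s2; r1; r2; s2'; r2'; r1'; s2'; r1; r2; s2; r2';
  r1; s1'; s2'; s1'; s2; s1; r1; r2; s1; r2'; r1'; s2'; s1'; s2'], 4, false);
  ([:: r1; r2; s2; r2'; r1; s1'; s2'; s1'; s2; s1; r1; r2; s2'; r2'; r1'; s2;
  r1; r2; s2'; r2'; r1'; s2'; r1; r2; s2; r2'; r1; s1'; s2'; s1'; s2; s1; r1;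
  r2; s1; r2'; r1'; r1'], 2, true); ([:: r1; r2; s2; r2'; r1; s1'; s2'; s1';
  s2; s1; r1; r2; s2'; r2'; r1'; s2; r1; r2; s2'; r2'; r1'; s2'; r1; r2; s2;
  r2'; r1; s1'; s2'; s1'; s2; s1; r1; r2; s1'], 0, false); ([:: r1; r2; s2;
  r2'; r1; s1'; s2'; s1'; s2; s1; r1; r2; s2'; r2'; r1'; s2; r1; r2; s2'; r2';
  r1'; s1; r1; r2; r1; r2'; r1'; r2'; r1; s2'], 6, true); ([:: r1; r2; s2;
  r2'; r1; s1'; s2'; s1'; s2; s1; r1; r2; s2'; r2'; r1'; s2; r1; r2; s2'; r2';
  r1'; s1; r1; r2; r1; r2'; r1'; r2'; r1; s2'; r1'], 2, false); ([:: r1; r2;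
  s2; r2'; r1; s1'; s2'; s1'; s2; s1; r1; r2; s2'; r2'; r1'; s2; r1; r2; s2';
  r2'; r1'; s1; r1; r2; r1; r2'; r1'; r2'; r1; s2'; r1'; r2; s1; r2'; r1';
  r1'], 2, true); ([:: r1; r2; s2; r2'; r1; s1'; s2'; s1'; s2; s1; r1; r2;
  s2'; r2'; r1'; s2; r1; r2; s2'; r2'; r1'; s1], 5, false); ([:: r1; r2; s2;
  r2'; r1; s1'; s2'; s1'; s2; s1; r1; r2; s2'; r2'; r1'; s2; r1; r2; s2'; r2';
  r1'; s1; r1; s2'; r1'; r2; s1; r1; r2'; r2'], 3, false); ([:: r1; r2; s2;
  r2'; r1; s1'; s2'; s1'; s2; s1; r1; r2; s2'; r2'; r1'; s2; r1; r2; s2'; r2';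
  r1'; s1; r1; s2'; r1'; r2; s1; r1; s1'; r1'; r2'], 2, true); ([:: r1; r2;
  s2; r2'; r1; s1'; s2'; s1'; s2; s1; r1; r2; s2'; r2'; r1'; s2; r1; r2; s2';
  r2'; r1'; s1; r1; s2'; r1'; r2; s1; r1; s1'; r1'; r2'; r1], 5, false);
  ([:: r1; r2; s2; r2'; r1; s1'; s2'; s1'; s2; s1; r1; r2; s2'; r2'; r1'; s2;
  r1; r2; s2'; r2'; r1'; s1; r1; s2'; r1'; r2; s1; r1; s1'; r1'; r2'; r1;
  r2], 6, false); ([:: r1; r2; s2; r2'; r1; s1'; s2'; s1'; s2; s1; r1; r2;
  s2'; r2'; r1'; s2; s1; r1'; r2; s2'], 6, true); ([:: r1; r2; s2; r2'; r1;
  s1'; s2'; s1'; s2; s1; r1; r2; s2'; r2'; r1'; s2; s1; r1'; r2; s2';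
  r2'], 5, true); ([:: r1; r2; s2; r2'; r1; s1'; s2'; s1'; s2; s1; r1; r2;
  s2'; r2'; r1'; s2; s1; r1'; r2; s2'; r2'; r1'], 2, false); ([:: r1; r2; s2;
  r2'; r1; s1'; s2'; s1'; s2; s1; r1; r2; s2'; r2'; r1'; s2; s1; r1'; r2; s2';
  r2'; r1'; r2; r1; s1; r2'; r2'], 3, true); ([:: r1; r2; s2; r2'; r1; s1';
  s2'; s1'; s2; s1; r1; r2; s2'; r2'; r1'; s2; s1; r1'; r2; s2'; r2'; r1'; r2;
  r1; s1; r1'; s1'; r2'; r1; s2; r1; r2'; r2'; r2'], 3, false); ([:: r1; r2;
  s2; r2'; r1; s1'; s2'; s1'; s2; s1; r1; r2; s2'; r2'; r1'; s2; s1; r1'; r2;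
  s2'; r2'; r1'; r2; r1; s1; r1'; s1'; r2'; r1; s2; r1; r2'; s1';
  r2'], 2, true); ([:: r1; r2; s2; r2'; r1; s1'; s2'; s1'; s2; s1; r1; r2;
  s2'; r2'; r1'; s2; s1; r1'; r2; s2'; r2'; r1'; r2; r1; s1; r1'; s1'; r2';
  r1; s2; r1; r2'; s1'; r2'; r1], 6, false); ([:: r1; r2; s2; r2'; r1; s1';
  s2'; s1'; s2; s1; r1; r2; s2'; r2'; r1'; s2; s1; r1'; r2; s2'; r2'; r1'; r2;
  r1; s1; r1'; s1'; r2'; r1; s2; r1; r2'; r1; r2'; r2'], 3, false); ([:: r1;
  r2; s2; r2'; r1; s1'; s2'; s1'; s2; s1; r1; r2; s2'; r2'; r1'; s2; s1; r1';
  r2; s2'; r2'; r1'; r2; r1; s1; r1'; s1'; r2'; r1; s2; r1; r2'], 3, true);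
  ([:: r1; r2; s2; r2'; r1; s1'; s2'; s1'; s2; s1; r1; r2; s2'; r2'; r1'; s2;
  s1; r1'; r2; s2'; r2'; r1'; r2; r1; s1; r1'; s1'; r2'; r1; s2], 5, false);
  ([:: r1; r2; s2; r2'; r1; s1'; s2'; s1'; s2; s1; r1; r2; s2'; r2'; r1'; s2;
  s1; r1'; r2; s2'; r2'; r1'; r2; r1; s1; r1'; s1'; r2'; r1; s2; r1; s1'; r2;
  r1; r2'; r1'; r2'], 5, true); ([:: r1; r2; s2; r2'; r1; s1'; s2'; s1'; s2;
  s1; r1; r2; s2'; r2'; r1'; s2; s1; r1'; r2; s2'; r2'; r1'; r2; r1; s1; r1';
  s1'; r2'; r1; s2; r1; s1'; r2; r1; r2'; r1'; r2'; r1'], 2, false); ([:: r1;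
  r2; s2; r2'; r1; s1'; s2'; s1'; s2; s1; r1; r2; s2'; r2'; r1'; s2; s1; r1';
  r2; s2'; r2'; r1'; r2; r1; s1; r1'; s1'; r2'; r1; s2; r1; s1'; r2; r1; s1';
  r1'; r2'], 2, true); ([:: r1; r2; s2; r2'; r1; s1'; s2'; s1'; s2; s1; r1;
  r2; s2'; r2'; r1'; s2; s1; r1'; r2; s2'; r2'; r1'; r2; r1; s1; r1'; s1';
  r2'; r1; s2; r1; s1'; r2; r1; s1'; r1'; r2'; r1], 5, false); ([:: r1; r2;
  s2; r2'; r1; s1'; s2'; s1'; s2; s1; r1; r2; s2'; r2'; r1'; s2; s1; r1'; r2;
  s2'; r2'; r1'; r2; r1; s1; r1'; s1'; r2'; r1; s2; r1; s1'; r2; r1; s1'; r1';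
  r2'; r1; r2], 6, false); ([:: r1; r2; s2; r2'; r1; s1'; s2'; s1'; s2; s1;
  r1; r2; s2'; r2'; r1'; s2; s1; r1'; r2; s2'; r2'; r1'; r2; r1; s1; r1'; s1';
  r2'; r1; s2; r1; s1'; r2; r1; s1'; r1'; r2'; s1; r1; s2'; r1'; r2; s1; r2';
  r1'; r1'], 2, false); ([:: r1; r2; s2; r2'; r1; s1'; s2'; s1'; s2; s1; r1;
  r2; s2'; r2'; r1'; s2; s1; r1'; r2; s2'; r2'; r1'; r2; r1; s1; r1'; s1';
  r2'; r1; s2; r1; s1'; r2; r1; s1'; r1'; r2'; s1; r1; s2'; r1'], 2, true);
  ([:: r1; r2; s2; r2'; r1; s1'; s2'; s1'; s2; s1; r1; r2; s2'; r2'; r1'; s2;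
  s1; r1'; r2; s2'; r2'; r1'; r2; r1; s1; r1'; s1'; r2'; r1; s2; r1; s1'; r2;
  r1; s1'; r1'; r2'; s1; r1; s2'], 6, false); ([:: r1; r2; s2; r2'; r1; s1';
  s2'; s1'; s2; s1; r1; r2; s2'; r2'; r1'; s2; s1; r1'; r2; s2'; r2'; r1'; r2;
  r1; s1; r1'; s1'; r2'; r1; s2; r1; s1'; r2; r1; s1'; r1'; r2'; s1; r2';
  r2'], 3, false); ([:: r1; r2; s2; r2'; r1; s1'; s2'; s1'; s2; s1; r1; r2;
  s2'; r2'; r1'; s2; s1; r1'; r2; s2'; r2'; r1'; r2; r1; s1; r1'; s1'; r2';
  r1; s2; r1; s1'; r2; r1; s1'; r1'; r2'; s1; r2'; r1'; r1'], 2, false);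
  ([:: r1; r2; s2; r2'; r1; s1'; s2'; s1'; s2; s1; r1; r2; s2'; r2'; r1'; s2;
  s1; r1'; r2; s2'; r2'; r1'; r2; r1; s1; r1'; s1'; r2'; r1; s2; r1; s1'; r2;
  r1; s1'; r1'], 2, true); ([:: r1; r2; s2; r2'; r1; s1'; s2'; s1'; s2; s1;
  r1; r2; s2'; r2'; r1'; s2; s1; r1'; r2; s2'; r2'; r1'; r2; r1; s1; r1'; s1';
  r2'; r1; s2; r1; s1'; r2; r1; s1'; r1; r2'], 3, true); ([:: r1; r2; s2; r2';
  r1; s1'; s2'; s1'; s2; s1; r1; r2; s2'; r2'; r1'; s2; s1; r1'; r2; s2'; r2';
  r1'; r2; r1; s1; r1'; s1'; r2'; r1; s2; r1; s1'; r2; r1; s1'], 6, false);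
  ([:: r1; r2; s2; r2'; r1; s1'; s2'; s1'; s2; s1; r1; r2; s2'; r2'; r1'; s2;
  s1; r1'; r2; s2'; r2'; r1'; r2; r1; s1; r1'; s1'; r2'; r1; s2; r1; s1'; r2;
  r1], 6, true); ([:: r1; r2; s2; r2'; r1; s1'; s2'; s1'; s2; s1; r1; r2; s2';
  r2'; r1'; s2; s1; r1'; r2; s2'; r2'; r1'; r2; r1; s1; r1'; s1'; r2'; r1; s2;
  r1; s1'; r2; r1; r1; r2'], 3, false); ([:: r1; r2; s2; r2'; r1; s1'; s2';
  s1'; s2; s1; r1; r2; s2'; r2'; r1'; s2; s1; r1'; r2; s2'; r2'; r1'; r2; r1;
  s1; r1'; s1'; r2'; r1; s2; r1; s1'; r2; r1; r1; r2'; s1; r2'; r1';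
  r1'], 2, true); ([:: r1; r2; s2; r2'; r1; s1'; s2'; s1'; s2; s1; r1; r2;
  s2'; r2'; r1'; s2; s1; r1'; r2; s2'; r2'; r1'; r2; r1; s1; r1'; s1'; r2';
  r1; s2; r1; s1'; r2], 2, false); ([:: r1; r2; s2; r2'; r1; s1'; s2'; s1';
  s2; s1; r1; r2; s2'; r2'; r1'; s2; s1; r1'; r2; s2'; r2'; r1'; r2; r1; s1;
  r1'; s1'; r2'; r1; s2; r1; r2'; r1; s2'; s2'], 1, true); ([:: r1; r2; s2;
  r2'; r1; s1'; s2'; s1'; s2; s1; r1; r2; s2'; r2'; r1'; s2; s1; r1'; r2; s2';
  r2'; r1'; r2; r1; s1; r1'; s1'; r2'; r1; s2; r1; r2'; s1'; r2';
  r1], 6, true); ([:: r1; r2; s2; r2'; r1; s1'; s2'; s1'; s2; s1; r1; r2; s2';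
  r2'; r1'; s2; s1; r1'; r2; s2'; r2'; r1'; r2; r1; s1; r1'; s1'; r2'; r1; s2;
  r1; r2'; s1'; r2'], 2, false); ([:: r1; r2; s2; r2'; r1; s1'; s2'; s1'; s2;
  s1; r1; r2; s2'; r2'; r1'; s2; s1; r1'; r2; s2'; r2'; r1'; r2; r1; s1; r1';
  s1'; r2'; r1; s2; r1; r2'; r2'; r2'], 3, true); ([:: r1; r2; s2; r2'; r1;
  s1'; s2'; s1'; s2; s1; r1; r2; s2'; r2'; r1'; s2; s1; r1'; r2; s2'; r2';
  r1'; r2; r1; s1; s2; s1'; s2'; s2'], 1, false); ([:: r1; r2; s2; r2'; r1;
  s1'; s2'; s1'; s2; s1; r1; r2; s2'; r2'; r1'; s2; s1; r1'; r2; s2'; r2';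
  r1'; r2; r1; s1; s2; s1'], 0, true); ([:: r1; r2; s2; r2'; r1; s1'; s2';
  s1'; s2; s1; r1; r2; s2'; r2'; r1'; s2; s1; r1'; r2; s2'; r2'; r1'; r2; r1;
  s1; s2; s1; s2'; s1'; s2'], 6, true); ([:: r1; r2; s2; r2'; r1; s1'; s2';
  s1'; s2; s1; r1; r2; s2'; r2'; r1'; s2; s1; r1'; r2; s2'; r2'; r1'; r2; r1;
  s1; s2; s1; s2'; s1'; s2'; r1; r2'], 3, false); ([:: r1; r2; s2; r2'; r1;
  s1'; s2'; s1'; s2; s1; r1; r2; s2'; r2'; r1'; s2; s1; r1'; r2; s2'; r2';
  r1'; r2; r1; s1; s2; s1; s2'; s1'; s2'; r1; r2'; s1; r2'; r2'], 3, true);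
  ([:: r1; r2; s2; r2'; r1; s1'; s2'; s1'; s2; s1; r1; r2; s2'; r2'; r1'; s2;
  s1; r1'; r2; s2'; r2'; r1'; r2; r1; s1; s2; s1; s2'; s1'; s2';
  r1'], 2, false); ([:: r1; r2; s2; r2'; r1; s1'; s2'; s1'; s2; s1; r1; r2;
  s2'; r2'; r1'; s2; s1; r1'; r2; s2'; r2'; r1'; r2; r1; s1; s2; s1; s2'; s1';
  s2'; r1'; r2'; s1; r2; r1'; r1'], 2, true); ([:: r1; r2; s2; r2'; r1; s1';
  s2'; s1'; s2; s1; r1; r2; s2'; r2'; r1'; s2; s1; r1'; r2; s2'; r2'; r1'; r2;
  r1], 4, false)];
  [::];
  [::];
  [:: ([:: s1; r1; s2; s1'; r1'; s2'; s1; r1; s2; s1'; s2; r1'; r2; s2'; s1;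
  s2'; s1'; s2], 4, true); ([:: s1; r1; s2; s1'; r1'; s2'; s1; r1; s2; s1';
  s2; r1'; r2; s2'; s1; s2'; s1'; s2; s1; s2; s1; s2'; s1'; s2';
  s2'], 1, true); ([:: s1; r1; s2; s1'; r1'; s2'; s1; r1; s2; s1'; s2; r1';
  r2; s2'; s1; s2'; s1'; s2; s1; s2'], 1, false); ([:: s1; r1; s2; s1'; r1';
  s2'; s1; r1; s2; s1'; s2; r1'; r2; s2'; s1; s2'; s1'; s2; s1; r2'; r1';
  r1'], 2, false); ([:: s1; r1; s2; s1'; r1'; s2'; s1; r1; s2; s1'; s2; r1';
  r2; s2'; s1; s2'; s1'; s2; r2'], 2, true); ([:: s1; r1; s2; s1'; r1'; s2';
  s1; r1; s2; s1'; s2; r1'; r2; s2'; s1; s2'; s1'; s2; r2'; r1], 6, false);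
  ([:: s1; r1; s2; s1'; r1'; s2'; s1; r1; s2; s1'; s2; r1'; r2; s2'; s1; s2';
  s1'; r2'; r1; s1; s2; s1'; s2'; s2'], 1, false); ([:: s1; r1; s2; s1'; r1';
  s2'; s1; r1; s2; s1'; s2; r1'; r2; s2'; s1; s2'; s1'; r2'; r1; s1; s2;
  s1'], 0, true); ([:: s1; r1; s2; s1'; r1'; s2'; s1; r1; s2; s1'; s2; r1';
  r2; s2'; s1; s2'; s1'; r2'; r1], 4, false); ([:: s1; r1; s2; s1'; r1'; s2';
  s1; r1; s2; s1'; s2; r1'; r2; s2'; r2'; r1; s2; r2; r1; r2'; r1'; s1'; r2';
  r1; s2; r1'], 5, true); ([:: s1; r1; s2; s1'; r1'; s2'; s1; r1; s2; s1'; s2;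
  r1'; r2; s2'; r2'; r1; s2; r2; r1; r2'; r1'; s1'; r2'; r1; s2; r2; r1; r2';
  r1'; r2'; r1; s2'; r1'; r2; s1; r2'; r1'; r1'], 2, false); ([:: s1; r1; s2;
  s1'; r1'; s2'; s1; r1; s2; s1'; s2; r1'; r2; s2'; r2'; r1; s2; r2; r1; r2';
  r1'; s1'; r2'; r1; s2; r2; r1; r2'; r1'; r2'; r1; s2'; r1'], 2, true);
  ([:: s1; r1; s2; s1'; r1'; s2'; s1; r1; s2; s1'; s2; r1'; r2; s2'; r2'; r1;
  s2; r2; r1; r2'; r1'; s1'; r2'; r1; s2; r2; r1; r2'; r1'; r2'; r1;
  s2'], 6, false); ([:: s1; r1; s2; s1'; r1'; s2'; s1; r1; s2; s1'; s2; r1';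
  r2; s2'; r2'; r1; s2; r2; r1; s1'; r1'; r2'], 5, true); ([:: s1; r1; s2;
  s1'; r1'; s2'; s1; r1; s2; s1'; s2; r1'; r2; s2'; r2'; r1; s2; r2; r1; s1';
  r1'; r2'; r1; r2'], 3, false); ([:: s1; r1; s2; s1'; r1'; s2'; s1; r1; s2;
  s1'; s2; r1'; r2; s2'; r2'; r1; s2; r2; r1; s1'; r1'; r2'; r1; r2'; r1; r2';
  r2'], 3, true); ([:: s1; r1; s2; s1'; r1'; s2'; s1; r1; s2; s1'; s2; r1';
  r2; s2'; r2'; r1; s2; r2; r1; s1'; r1'; r2'; r1; r2'; s1'; r2';
  r1], 6, true); ([:: s1; r1; s2; s1'; r1'; s2'; s1; r1; s2; s1'; s2; r1'; r2;
  s2'; r2'; r1; s2; r2; r1; s1'; r1'; r2'; r1; r2'; s1'; r2'], 2, false);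
  ([:: s1; r1; s2; s1'; r1'; s2'; s1; r1; s2; s1'; s2; r1'; r2; s2'; r2'; r1;
  s2; r2; r1; s1'; r1'; r2'; r1; r2'; r2'; r2'], 3, true); ([:: s1; r1; s2;
  s1'; r1'; s2'; s1; r1; s2; s1'; s2; r1'; r2; s2'; r2'; r1; s2; r2; r1; s1';
  r1'; r2'; s2'; r1'; r2; s1], 6, false); ([:: s1; r1; s2; s1'; r1'; s2'; s1;
  r1; s2; s1'; s2; r1'; r2; s2'; r2'; r1; s2; r2; r1'; r1'], 2, false);
  ([:: s1; r1; s2; s1'; r1'; s2'; s1; r1; s2; s1'; s2; r1'; r2; s2'; r2'; r1;
  s2; s1'; r2], 2, true); ([:: s1; r1; s2; s1'; r1'; s2'; s1; r1; s2; s1'; s2;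
  r1'; r2; s2'; r2'; r1; s2; s1'; r2; r1; r1; r2'; s1; r2'; r2'], 3, false);
  ([:: s1; r1; s2; s1'; r1'; s2'; s1; r1; s2; s1'; s2; r1'; r2; s2'; r2'; r1;
  s2; s1'; r2; r1; r1; r2'], 3, true); ([:: s1; r1; s2; s1'; r1'; s2'; s1; r1;
  s2; s1'; s2; r1'; r2; s2'; r2'; r1; s2; s1'; r2; r1], 6, false); ([:: s1;
  r1; s2; s1'; r1'; s2'; s1; r1; s2; s1'; s2; r1'; r2; s2'; r2'; r1; s2; s1';
  r2; r1; s2; s1'; r1'; r2'; s1; r2; r1'; r1'], 2, false); ([:: s1; r1; s2;
  s1'; r1'; s2'; s1; r1; s2; s1'; s2; r1'; r2; s2'; r2'; r1; s2; s1'; r2; r1;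
  s2; s1'; r1'], 2, true); ([:: s1; r1; s2; s1'; r1'; s2'; s1; r1; s2; s1';
  s2; r1'; r2; s2'; r2'; r1; s2; s1'; r2; r1; s2; s1'; r1; r2'; s1; r2';
  r2'], 3, false); ([:: s1; r1; s2; s1'; r1'; s2'; s1; r1; s2; s1'; s2; r1';
  r2; s2'; r2'; r1; s2; s1'; r2; r1; s2; s1'; r1; r2'], 3, true); ([:: s1; r1;
  s2; s1'; r1'; s2'; s1; r1; s2; s1'; s2; r1'; r2; s2'; r2'; r1; s2; s1'; r2;
  r1; s2; s1'], 6, false); ([:: s1; r1; s2; s1'; r1'; s2'; s1; r1; s2; s1';
  s2; r1'; r2; s2'; r2'; r1; s2; s1'; r2; r1; s2; s1'; s2; r1'; r2'; r1'; r2;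
  s2'; r2'; r1; r2; r1; s2'], 6, true); ([:: s1; r1; s2; s1'; r1'; s2'; s1;
  r1; s2; s1'; s2; r1'; r2; s2'; r2'; r1; s2; s1'; r2; r1; s2; s1'; s2; r1';
  r2'; r1'; r2; s2'; r2'; r1; r2; r1; s2'; r1; r2'], 3, false); ([:: s1; r1;
  s2; s1'; r1'; s2'; s1; r1; s2; s1'; s2; r1'; r2; s2'; r2'; r1; s2; s1'; r2;
  r1; s2; s1'; s2; r1'; r2'; r1'; r2; s2'; r2'; r1; r2; r1; s2'; r1; r2'; s1;
  r2'; r2'], 3, true); ([:: s1; r1; s2; s1'; r1'; s2'; s1; r1; s2; s1'; s2;
  r1'; r2; s2'; r2'; r1; s2; s1'; r2; r1; s2; s1'; s2; r1'; r2'; r1'; r2; s2';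
  r2'; r1; r2; r1; s2'; r1'], 2, false); ([:: s1; r1; s2; s1'; r1'; s2'; s1;
  r1; s2; s1'; s2; r1'; r2; s2'; r2'; r1; s2; s1'; r2; r1; s2; s1'; s2; r1';
  r2'; r1'; r2; s2'; r2'; r1; r2; r1; s2'; r1'; r2'; s1; r2; r1';
  r1'], 2, true); ([:: s1; r1; s2; s1'; r1'; s2'; s1; r1; s2; s1'; s2; r1';
  r2; s2'; r2'; r1; s2; s1'; r2; r1; s2; s1'; s2; r2'; r1'; r2'], 5, true);
  ([:: s1; r1; s2; s1'; r1'; s2'; s1; r1; s2; s1'; s2; r1'; r2; s2'; r2'; r1;
  s2; s1'; r2; r1; s2; s1'; s2; s1'; r1'; r2'; r1'], 5, false); ([:: s1; r1;
  s2; s1'; r1'; s2'; s1; r1; s2; s1'; s2; r1'; r2; s2'; r2'; r1; s2; s1'; r2;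
  r1; s2; s1'; s2; s1'; r1'; r2'; r1'; r2], 6, false); ([:: s1; r1; s2; s1';
  r1'; s2'; s1; r1; s2; s1'; s2; r1'; r2; s2'; r2'; r1; s2; s1'; r1'; r2;
  s2'], 6, true); ([:: s1; r1; s2; s1'; r1'; s2'; s1; r1; s2; s1'; s2; r1';
  r2; s2'; r2'; r1; s2; s1'; r1'; r2; s2'; r2'], 5, true); ([:: s1; r1; s2;
  s1'; r1'; s2'; s1; r1; s2; s1'; s2; r1'; r2; s2'; r2'; r1; s2; s1'; r1'; r2;
  s2'; r2'; r1; r2; r1; s1; r2'; r1'; r2'], 5, false); ([:: s1; r1; s2; s1';
  r1'; s2'; s1; r1; s2; s1'; s2; r1'; r2; s2'; r2'; r1; s2; s1'; r1'; r2; s2';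
  r2'; r1; r2; r1; s1; s2; s1'; s2'; s2'], 1, false); ([:: s1; r1; s2; s1';
  r1'; s2'; s1; r1; s2; s1'; s2; r1'; r2; s2'; r2'; r1; s2; s1'; r1'; r2; s2';
  r2'; r1; r2; r1; s1; s2; s1'], 0, true); ([:: s1; r1; s2; s1'; r1'; s2'; s1;
  r1; s2; s1'; s2; r1'; r2; s2'; r2'; r1; s2; s1'; r1'; r2; s2'; r2'; r1; r2;
  r1], 4, false)]].

Definition cert_img (s : FPgen) : seq (word FPgen * nat * bool) :=
  match s with
  | inr (inr gu) => [:: ([::], 1, false)]
  | inr (inr gp) => [:: ([:: lv], 1, false); ([::], 2, false)]
  | _ => [::]
  end.

(* pi_rep a * sigma_i^{+-1} = pi_rep (a sigma_i), and similarly for nu_rep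
   and rho_i (table indexed by a and by 2 i + sign). *)
Definition cert_pi_table : seq (seq (seq (word FVBgen * nat * bool))) :=
[::
  [:: [::]; [:: ([::], 0, true)]; [::]; [:: ([::], 1, true)]];
  [:: [::]; [:: ([:: s2], 0, true)]; [:: ([::], 1, false)]; [::]];
  [:: [:: ([::], 0, false)]; [::]; [::]; [:: ([:: s1], 1, true)]];
  [:: [:: ([:: s2], 0, false)]; [::]; [:: ([::], 4, true)];
  [:: ([::], 0, true); ([:: s1], 4, false)]];
  [:: [::]; [:: ([:: s1; s2], 0, true)]; [:: ([:: s1], 1, false)]; [::]];
  [:: [:: ([:: s1; s2], 0, false)]; [::]; [:: ([::], 4, false); ([:: s2;
  s1], 1, false)]; [:: ([::], 4, false)]]].
Definition cert_nu_table : seq (seq (seq (word FVBgen * nat * bool))) :=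
[::
  [:: [::]; [:: ([::], 2, true)]; [::]; [:: ([::], 3, true)]];
  [:: [::]; [:: ([:: r2], 2, true)]; [:: ([::], 3, false)]; [::]];
  [:: [:: ([::], 2, false)]; [::]; [::]; [:: ([:: r1], 3, true)]];
  [:: [:: ([:: r2], 2, false)]; [::]; [:: ([::], 5, true)];
  [:: ([::], 2, true); ([:: r1], 5, false)]];
  [:: [::]; [:: ([:: r1; r2], 2, true)]; [:: ([:: r1], 3, false)]; [::]];
  [:: [:: ([:: r1; r2], 2, false)]; [::]; [:: ([::], 5, false); ([:: r2;
  r1], 3, false)]; [:: ([::], 5, false)]]].

(* Boolean quantifiers over the finite index sets used below, with their
   reflection lemmas; unlike [forall], they compute under vm_compute. *)
Definition all_ix (p : pred 'I_(3.-1)) : bool := p ix1 && p ix2.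

Lemma all_ixP p : all_ix p -> forall i, p i.
Proof. by case/andP=> ? ? i; case: (ord2_cases i) => ->. Qed.

Definition all_pts (p : pred 'I_6) : bool :=
  all (fun k => p (ord_sat 5 k)) (iota 0 6).

Lemma all_ptsP p : all_pts p -> forall a, p a.
Proof.
by move/allP=> H a; rewrite -[a]ord_satK; apply: H; rewrite mem_iota ltn_ord.
Qed.

Definition all_cosets (p : pred coset) : bool :=
  all_pts (fun a => all_pts (fun b => p (a, b))).

Lemma all_cosetsP p : all_cosets p -> forall c, p c.
Proof. by rewrite /all_cosets => /all_ptsP H [a b]; exact: all_ptsP (H a) b. Qed.

Definition all_fvb_gens (p : FVBgen -> bool) : bool :=
  [&& p (Sg ix1), p (Sg ix2), p (Rh ix1) & p (Rh ix2)].

Lemma all_fvb_gensP p : all_fvb_gens p -> forall s, p s.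
Proof. by case/and4P=> ? ? ? ? [] i; case: (ord2_cases i) => ->. Qed.

Definition all_gamma_gens (p : Ggen -> bool) : bool :=
  [&& p gx, p gy, p gu, p gv & p gp && p gq].

Lemma all_gamma_gensP p : all_gamma_gens p -> forall g, p g.
Proof. by case/and5P=> ? ? ? ? /andP[? ?] []. Qed.

Definition all_fp_gens (p : FPgen -> bool) : bool :=
  [&& p (inl true), p (inl false), all (fun k => p (fgen k)) (iota 0 3) &
      all_gamma_gens (fun g => p (inr (inr g)))].

Lemma all_fp_gensP p : all_fp_gens p -> forall s, p s.
Proof.
case/and4P=> Ht Hf /allP Hk /all_gamma_gensP Hg [[]|[k|g]] //.
by rewrite -[k]ord_satK; apply: Hk; rewrite mem_iota ltn_ord.
Qed.

Definition check_s3 : bool :=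
  all_ix (fun i => all_pts (fun a => s3_act i (s3_act i a) == a)).

Definition check_rels : bool :=
  all_cosets (fun c => all (fun k =>
    let: (l, r) := nth ([::], [::]) fvb_rels k in
    (reach coset_act c l == reach coset_act c r) &&
    fp_certified (rw c l ++ winv (rw c r)) (cert_rel c k))
    (iota 0 (size fvb_rels))).

Definition check_steps : bool :=
  all_cosets (fun c => all_fvb_gens (fun s =>
    let c' := coset_act c (s, false) in
    fvb_certified ((coset_rep c ++ gen s) ++
                   winv (img (schreier_gen c s) ++ coset_rep c'))
                  (cert_step c s))).

Definition check_img_rels : bool :=
  all (fun k => let: (l, r) := nth ([::], [::]) fp_rels k in
    fvb_certified (img l ++ winv (img r))
                  (nth [::] cert_img_rel_table k)) (iota 0 (size fp_rels)).

Definition check_img_gens : bool :=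
  all_fp_gens (fun s =>
    (reach coset_act c0 (img_gen s) == c0) &&
    fp_certified (rw c0 (img_gen s) ++ winv (gen s)) (cert_img s)).

Definition check_pi_nu : bool :=
  all_ix (fun i => all (fun e : bool => all_pts (fun a =>
    let cert tab := nth [::] (nth [::] tab a) (2 * i + e) in
    fvb_certified ((pi_rep a ++ [:: (Sg i, e)]) ++ winv (pi_rep (s3_act i a)))
                  (cert cert_pi_table) &&
    fvb_certified ((nu_rep a ++ [:: (Rh i, e)]) ++ winv (nu_rep (s3_act i a)))
                  (cert cert_nu_table))) [:: false; true]).

Lemma check_s3_ok : check_s3. Proof. by vm_compute. Qed.
Lemma check_rels_ok : check_rels. Proof. by vm_compute. Qed.
Lemma check_steps_ok : check_steps. Proof. by vm_compute. Qed.
Lemma check_img_rels_ok : check_img_rels. Proof. by vm_compute. Qed.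
Lemma check_img_gens_ok : check_img_gens. Proof. by vm_compute. Qed.
Lemma check_pi_nu_ok : check_pi_nu. Proof. by vm_compute. Qed.

Lemma s3_actK i : involutive (s3_act i).
Proof. by move=> a; apply/eqP; move: a; apply/all_ptsP/(all_ixP check_s3_ok). Qed.

Lemma pi_act_invK a x : pi_act (pi_act a x) (inv_letter x) = a.
Proof. exact: s3_actK. Qed.

Lemma nu_act_invK b x : nu_act (nu_act b x) (inv_letter x) = b.
Proof. by case: x => [[i|i] e] //=; rewrite /nu_act /= s3_actK. Qed.

Lemma coset_act_invK c x : coset_act (coset_act c x) (inv_letter x) = c.
Proof. by case: c => a b; rewrite /coset_act /= pi_act_invK nu_act_invK. Qed.

Lemma fvb_rel_compat c l r : prel (FVB 3) l r ->
  reach coset_act c l = reach coset_act c r /\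
  weq FP (rw c l) (rw c r).
Proof.
case/fvb_rels_complete=> k Hk E.
have /allP /(_ k) := all_cosetsP check_rels_ok c; rewrite mem_iota -E.
by case/(_ Hk)/andP=> /eqP -> /(certified_weq fp_eqbP fp_relsP).
Qed.

Lemma img_gen_rel l r : prel FP l r -> weq (FVB 3) (img l) (img r).
Proof.
case/fp_rels_complete=> k Hk E; have /allP /(_ k) := check_img_rels_ok.
by rewrite mem_iota -E => /(_ Hk) /(certified_weq fvb_eqbP fvb_relsP).
Qed.

Lemma img_gen_compat s :
  reach coset_act c0 (img_gen s) = c0 /\
  weq FP (rw c0 (img_gen s)) (gen s).
Proof.
have /andP [/eqP -> Hcert] := all_fp_gensP check_img_gens_ok s.
by split=> //; apply: (certified_weq (P := FP) fp_eqbP fp_relsP Hcert).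
Qed.

Lemma coset_rep_gen c s : weq (FVB 3) (coset_rep c ++ gen s)
  (img (schreier_gen c s) ++ coset_rep (coset_act c (s, false))).
Proof.
have := all_fvb_gensP (all_cosetsP check_steps_ok c) s.
exact: (certified_weq (P := FVB 3) fvb_eqbP fvb_relsP).
Qed.

Lemma stabiliser_iso :
  iso_to_subgroup FP (FVB 3) (fun v => reach coset_act c0 v = c0).
Proof.
apply: (@schreier_transfer _ _ _ c0 coset_act schreier_gen img_gen coset_rep) => //.
- exact: coset_act_invK.
- by move=> c l r /(fvb_rel_compat c) [].
- by move=> c l r /(fvb_rel_compat c) [].
- exact: img_gen_rel.
- by move=> s; case: (img_gen_compat s).
- by move=> s; case: (img_gen_compat s).
- exact: coset_rep_gen.
Qed.

Lemma pi_nu_rep_step i e a :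
  weq (FVB 3) (pi_rep a ++ [:: (Sg i, e)]) (pi_rep (s3_act i a)) /\
  weq (FVB 3) (nu_rep a ++ [:: (Rh i, e)]) (nu_rep (s3_act i a)).
Proof.
have He : e \in [:: false; true] by case: e.
have /allP /(_ e He) /all_ptsP /(_ a) /andP [Hpi Hnu] := all_ixP check_pi_nu_ok i.
by split; [move: Hpi | move: Hnu];
   apply: (certified_weq (P := FVB 3) fvb_eqbP fvb_relsP).
Qed.

Lemma pi_word_flatten v :
  pi_word 3 v = flatten (map (fun x => [:: pi_letter 3 x]) v).
Proof. by elim: v => //= x v ->. Qed.

Definition nu_letter (x : letter FVBgen) : word FVBgen :=
  if is_rho 3 x then [:: x] else [::].

Lemma nu_word_flatten v : nu_word 3 v = flatten (map nu_letter v).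
Proof. by elim: v => //= x v <-; rewrite /nu_letter; case: ifP. Qed.

Lemma pi_kernel v : in_FVP 3 v <-> reach pi_act ord0 v = ord0.
Proof.
rewrite /in_FVP pi_word_flatten; apply: (kernel_stabiliser (drep := pi_rep)) => //.
- exact: pi_act_invK.
- by move=> a l r /(fvb_rel_compat (a, a)) [+ _]; rewrite !reach_coset => -[].
- by move=> a [[i|i] e].
- by move=> a [[i|i] e]; case: (pi_nu_rep_step i e a).
Qed.

Lemma nu_kernel v : in_FVK 3 v <-> reach nu_act ord0 v = ord0.
Proof.
rewrite /in_FVK nu_word_flatten; apply: (kernel_stabiliser (drep := nu_rep)) => //.
- exact: nu_act_invK.
- by move=> b l r /(fvb_rel_compat (b, b)) [+ _]; rewrite !reach_coset => -[].
- by move=> b [[i|i] e].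
- move=> b [[i|i] e]; rewrite /nu_letter /=; last by case: (pi_nu_rep_step i e b).
  by rewrite cats0; exact: weq_refl.
Qed.

Lemma in_X_stabiliser v : in_X 3 v <-> reach coset_act c0 v = c0.
Proof.
rewrite reach_coset /in_X.
by split=> [[/pi_kernel -> /nu_kernel ->] | [/pi_kernel ? /nu_kernel ?]].
Qed.

Theorem mainTheorem3 :
  iso_to_subgroup (free_product Z2 (free_product (free_group 3) Gamma))
                  (FVB 3) (in_X 3).
Proof.
apply: iso_to_subgroup_ext stabiliser_iso => v.
by split=> /in_X_stabiliser.
Qed.
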